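(* Let $f:\mathbb R\to\mathbb R$ be Lipschitz continuous with constant $\lambda>0$ and rpl-approximable. Then for every $\epsilon>0$ there is a rational piecewise linear function $L$ of bitsize polynomial in $\epsilon^{-1}$ such that $L$ is an $\epsilon$-approximation of $f$ and $L$ is Lipschitz continuous with constant $(1+\epsilon)\lambda$.
   Context: A dyadic rational is a rational whose denominator is a power of $2$. Bitsize: for $n\in\mathbb N$, $1$ if $n=0$ and $\lceil\log_2(n+1)\rceil$ otherwise; for $n\in\mathbb Z$, $1$ plus the bitsize of $|n|$; for a reduced dyadic $m/2^\ell$, the bitsize of $m$ plus $\ell+1$. A piecewise linear function $L:\mathbb R\to\mathbb R$ (finitely many pieces, thresholds $t_1<\dots<t_n$, slopes $a_i$ and constants $b_i$ in its unique minimal representation) is rational if all $a_i,b_i,t_i$ are dyadic rationals; its bitsize is the sum of their bitsizes. $g$ is an $\epsilon$-approximation of $f$ if $|f(x)-g(x)|\le\epsilon|f(x)|+\epsilon$ for all $x$. $f$ is rpl-approximable if for every $\epsilon>0$ there is a continuous rational piecewise linear function of bitsize polynomial in $\epsilon^{-1}$ that $\epsilon$-approximates $f$. *)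

From Stdlib Require Import Reals ZArith List Lra.
Import ListNotations.
Open Scope R_scope.

Record dy := Dy { dnum : Z; dexp : nat }.

Definition dval (d : dy) : R := IZR (dnum d) / 2 ^ (dexp d).

Definition dreduced (d : dy) : Prop := dexp d = 0%nat \/ Z.odd (dnum d) = true.

Definition bs_nat (n : Z) : nat :=
  if Z.eqb n 0 then 1%nat else Z.to_nat (Z.log2_up (n + 1)).

Definition bs_int (m : Z) : nat := S (bs_nat (Z.abs m)).

Definition bs_dy (d : dy) : nat := (bs_int (dnum d) + dexp d + 1)%nat.

(* Representation of a piecewise linear function: thresholds t_1 < ... < t_n
   and n+1 pieces (a_i, b_i) (slope, constant); piece i is used on
   [t_i, t_{i+1}) with t_0 = -oo, t_{n+1} = +oo. *)
Record plrep := PLRep { thr : list dy; pcs : list (dy * dy) }.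

Fixpoint pl_eval_aux (ts : list dy) (ps : list (dy * dy)) (x : R) : R :=
  match ts, ps with
  | t :: ts', (a, b) :: ps' =>
      if Rlt_dec x (dval t) then dval a * x + dval b else pl_eval_aux ts' ps' x
  | [], (a, b) :: _ => dval a * x + dval b
  | _, [] => 0
  end.

Definition pl_eval (r : plrep) (x : R) : R := pl_eval_aux (thr r) (pcs r) x.

Fixpoint strictly_increasing (l : list R) : Prop :=
  match l with
  | x :: ((y :: _) as l') => x < y /\ strictly_increasing l'
  | _ => True
  end.

Fixpoint consecutive_distinct (l : list (dy * dy)) : Prop :=
  match l with
  | (a, b) :: ((((a', b') :: _)) as l') =>
      (dval a <> dval a' \/ dval b <> dval b') /\ consecutive_distinct l'
  | _ => True
  end.

Definition pl_wf (r : plrep) : Prop :=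
  length (pcs r) = S (length (thr r)) /\
  strictly_increasing (map dval (thr r)) /\
  consecutive_distinct (pcs r) /\
  Forall dreduced (thr r) /\
  Forall (fun p => dreduced (fst p) /\ dreduced (snd p)) (pcs r).

Definition pl_bitsize (r : plrep) : nat :=
  (fold_right (fun t s => bs_dy t + s) 0 (thr r) +
   fold_right (fun p s => bs_dy (fst p) + bs_dy (snd p) + s) 0 (pcs r))%nat.

Definition rpl_of_size (L : R -> R) (s : nat) : Prop :=
  exists r : plrep, pl_wf r /\ (forall x, L x = pl_eval r x) /\ (pl_bitsize r <= s)%nat.

Definition eps_approx (eps : R) (f g : R -> R) : Prop :=
  forall x, Rabs (f x - g x) <= eps * Rabs (f x) + eps.

Definition lipschitz (lam : R) (f : R -> R) : Prop :=
  forall x y, Rabs (f x - f y) <= lam * Rabs (x - y).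

(* "bitsize polynomial in 1/eps": bounded by c * (1 + 1/eps)^k *)
Definition rpl_approximable (f : R -> R) : Prop :=
  exists c k : nat, forall eps, 0 < eps ->
    exists (L : R -> R) (s : nat),
      continuity L /\ rpl_of_size L s /\ INR s <= INR c * (1 + / eps) ^ k /\
      eps_approx eps f L.

(* Let g be a rational piecewise linear del-approximation of f and Lm >= (1 + del) lam a
   dyadic.  The inf-convolution H x = inf_y (g y + Lm |x - y|) is Lm-Lipschitz and below g;
   since f is lam-Lipschitz, g itself is Lm-Lipschitz up to an error of order del (|f x| + 1),
   so H stays that close to g.  As g is piecewise linear, H is a minimum over the pieces of
   g of maxima of at most three lines with dyadic coefficients; its breakpoints are among
   the crossings of these lines, which need not be dyadic.  Replacing H by its chord on
   every grid cell of width 2^-m that contains a crossing keeps the Lipschitz constant,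
   moves H by at most 2 Lm 2^-m, and leaves a function whose breakpoints are grid points
   and whose coefficients are dyadic, with bitsize polynomial in that of g and in m. *)

From Stdlib Require Import Reals ZArith Lra Lia List Psatz Classical.
Import ListNotations.
Open Scope R_scope.

(** * Dyadic arithmetic *)

Definition dadd (d1 d2 : dy) : dy :=
  Dy (dnum d1 * 2 ^ Z.of_nat (dexp d2) + dnum d2 * 2 ^ Z.of_nat (dexp d1))%Z
     (dexp d1 + dexp d2).
Definition dmul (d1 d2 : dy) : dy := Dy (dnum d1 * dnum d2)%Z (dexp d1 + dexp d2).
Definition dopp (d : dy) : dy := Dy (- dnum d)%Z (dexp d).
Definition dsub (d1 d2 : dy) : dy := dadd d1 (dopp d2).
Definition dpow2 (m : nat) : dy := Dy (2 ^ Z.of_nat m) 0.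

Lemma IZR_pow2 (n : nat) : IZR (2 ^ Z.of_nat n) = 2 ^ n.
Proof. rewrite <- pow_IZR. reflexivity. Qed.

Lemma pow2_pos (n : nat) : 0 < 2 ^ n.
Proof. apply pow_lt; lra. Qed.

Lemma Zpow2_pos (n : nat) : (0 < 2 ^ Z.of_nat n)%Z.
Proof. apply Z.pow_pos_nonneg; lia. Qed.

Lemma Zpow2_le (a b : nat) : (a <= b)%nat -> (2 ^ Z.of_nat a <= 2 ^ Z.of_nat b)%Z.
Proof. intros; apply Z.pow_le_mono_r; lia. Qed.

Lemma dval_add d1 d2 : dval (dadd d1 d2) = dval d1 + dval d2.
Proof.
  unfold dval, dadd; simpl. rewrite plus_IZR, !mult_IZR, !IZR_pow2, pow_add.
  pose proof (pow2_pos (dexp d1)); pose proof (pow2_pos (dexp d2)).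
  field; lra.
Qed.

Lemma dval_mul d1 d2 : dval (dmul d1 d2) = dval d1 * dval d2.
Proof.
  unfold dval, dmul; simpl. rewrite mult_IZR, pow_add.
  pose proof (pow2_pos (dexp d1)); pose proof (pow2_pos (dexp d2)).
  field; lra.
Qed.

Lemma dval_opp d : dval (dopp d) = - dval d.
Proof. unfold dval, dopp; simpl. rewrite opp_IZR. lra. Qed.

Lemma dval_sub d1 d2 : dval (dsub d1 d2) = dval d1 - dval d2.
Proof. unfold dsub. rewrite dval_add, dval_opp. lra. Qed.

Lemma dval_pow2 m : dval (dpow2 m) = 2 ^ m.
Proof. unfold dval, dpow2; simpl. rewrite IZR_pow2. field. Qed.

Definition dy_bounded (B : nat) (d : dy) : Prop :=
  (Z.abs (dnum d) <= 2 ^ Z.of_nat B)%Z /\ (dexp d <= B)%nat.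

Lemma dy_bounded_mono B B' d : (B <= B')%nat -> dy_bounded B d -> dy_bounded B' d.
Proof.
  intros H [H1 H2]; split; [|lia].
  eapply Z.le_trans; [eauto|]. apply Zpow2_le; lia.
Qed.

Lemma dy_bounded_opp B d : dy_bounded B d -> dy_bounded B (dopp d).
Proof. intros [H1 H2]; split; simpl; [rewrite Z.abs_opp|]; auto. Qed.

Lemma dy_bounded_mul B d1 d2 :
  dy_bounded B d1 -> dy_bounded B d2 -> dy_bounded (2 * B) (dmul d1 d2).
Proof.
  intros [H1 H2] [H3 H4]; split; simpl; [|lia].
  rewrite Z.abs_mul.
  replace (Z.of_nat (B + (B + 0))) with (Z.of_nat B + Z.of_nat B)%Z by lia.
  rewrite Z.pow_add_r by lia.
  apply Z.mul_le_mono_nonneg; auto; apply Z.abs_nonneg.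
Qed.

Lemma dy_bounded_add B d1 d2 :
  dy_bounded B d1 -> dy_bounded B d2 -> dy_bounded (2 * B + 1) (dadd d1 d2).
Proof.
  intros [H1 H2] [H3 H4]; split; simpl; [|lia].
  assert (Hm : forall n e, (Z.abs n <= 2 ^ Z.of_nat B)%Z -> (e <= B)%nat ->
            (Z.abs (n * 2 ^ Z.of_nat e) <= 2 ^ Z.of_nat B * 2 ^ Z.of_nat B)%Z).
  { intros n e Hn He. rewrite Z.abs_mul, (Z.abs_eq (2 ^ _)) by (pose proof (Zpow2_pos e); lia).
    apply Z.mul_le_mono_nonneg; [apply Z.abs_nonneg|auto|pose proof (Zpow2_pos e); lia|].
    apply Zpow2_le; auto. }
  pose proof (Hm _ _ H1 H4). pose proof (Hm _ _ H3 H2).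
  replace (Z.of_nat (B + (B + 0) + 1)) with (Z.of_nat B + Z.of_nat B + 1)%Z by lia.
  rewrite !Z.pow_add_r by lia.
  eapply Z.le_trans; [apply Z.abs_triangle|]. lia.
Qed.

Lemma dy_bounded_sub B d1 d2 :
  dy_bounded B d1 -> dy_bounded B d2 -> dy_bounded (2 * B + 1) (dsub d1 d2).
Proof. intros; apply dy_bounded_add; auto; apply dy_bounded_opp; auto. Qed.

Lemma dy_bounded_pow2 B m : (m <= B)%nat -> dy_bounded B (dpow2 m).
Proof.
  intros Hm; split; simpl; [|lia].
  rewrite Z.abs_eq by (pose proof (Zpow2_pos m); lia). apply Zpow2_le; auto.
Qed.

Lemma Rabs_div_pos a b : 0 < b -> Rabs (a / b) = Rabs a / b.
Proof.
  intros Hb. unfold Rdiv. rewrite Rabs_mult, (Rabs_right (/ b)); auto.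
  left; apply Rinv_0_lt_compat; auto.
Qed.

Lemma Rabs_dval_bounded B d : dy_bounded B d -> Rabs (dval d) <= 2 ^ B.
Proof.
  intros [H1 H2]. unfold dval.
  pose proof (pow2_pos (dexp d)).
  assert (1 <= 2 ^ dexp d) by (apply pow_R1_Rle; lra).
  rewrite Rabs_div_pos by lra.
  assert (Rabs (IZR (dnum d)) <= 2 ^ B) by (rewrite <- abs_IZR, <- IZR_pow2; apply IZR_le; auto).
  apply Rle_trans with (Rabs (IZR (dnum d))); [|auto].
  apply Rmult_le_reg_r with (2 ^ dexp d); [lra|].
  unfold Rdiv. rewrite Rmult_assoc, Rinv_l by lra.
  pose proof (Rabs_pos (IZR (dnum d))). nra.
Qed.

Lemma dy_bounded_separated B d1 d2 :
  dy_bounded B d1 -> dy_bounded B d2 -> dval d1 <> dval d2 ->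
  / 2 ^ (2 * B) <= Rabs (dval d1 - dval d2).
Proof.
  intros [_ H2] [_ H4] Hne.
  rewrite <- dval_sub. unfold dval, dsub, dadd, dopp; cbn [dnum dexp].
  set (n := (dnum d1 * 2 ^ Z.of_nat (dexp d2) + - dnum d2 * 2 ^ Z.of_nat (dexp d1))%Z).
  set (e := (dexp d1 + dexp d2)%nat).
  assert (n <> 0%Z).
  { intro Hn. apply Hne. apply Rminus_diag_uniq. rewrite <- dval_sub.
    unfold dval, dsub, dadd, dopp; cbn [dnum dexp]. fold n. rewrite Hn. lra. }
  pose proof (pow2_pos e).
  assert (1 <= Rabs (IZR n)) by (rewrite <- abs_IZR; apply IZR_le; lia).
  assert (2 ^ e <= 2 ^ (2 * B)) by (apply Rle_pow; [lra|unfold e; lia]).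
  rewrite Rabs_div_pos by lra.
  apply Rle_trans with (/ 2 ^ e); [apply Rinv_le_contravar; lra|].
  unfold Rdiv. rewrite <- (Rmult_1_l (/ 2 ^ e)) at 1.
  apply Rmult_le_compat_r; [left; apply Rinv_0_lt_compat|]; lra.
Qed.

Lemma bs_nat_le (n : Z) (B : nat) :
  (0 <= n)%Z -> (n <= 2 ^ Z.of_nat B)%Z -> (bs_nat n <= B + 1)%nat.
Proof.
  intros H0 H1. unfold bs_nat. destruct (Z.eqb_spec n 0); [lia|].
  assert (Z.log2_up (n + 1) <= Z.of_nat B + 1)%Z.
  { apply Z.log2_up_le_pow2; [lia|]. rewrite Z.pow_add_r by lia.
    pose proof (Zpow2_pos B). lia. }
  lia.
Qed.

Lemma bs_dy_bounded B d : dy_bounded B d -> (bs_dy d <= 2 * B + 3)%nat.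
Proof.
  intros [H1 H2]. unfold bs_dy, bs_int.
  pose proof (bs_nat_le (Z.abs (dnum d)) B (Z.abs_nonneg _) H1). lia.
Qed.

Lemma dy_bounded_bs_dy s d : (bs_dy d <= s)%nat -> dy_bounded s d.
Proof.
  intros H. unfold bs_dy, bs_int, bs_nat in H. split; [|lia].
  destruct (Z.eqb_spec (Z.abs (dnum d)) 0) as [E|E].
  - rewrite E. pose proof (Zpow2_pos s). lia.
  - pose proof (Z.log2_up_nonneg (Z.abs (dnum d) + 1)).
    assert (Z.abs (dnum d) + 1 <= 2 ^ Z.of_nat s)%Z
      by (apply Z.log2_up_le_pow2; lia).
    lia.
Qed.

Fixpoint dreduce_aux (e : nat) (n : Z) : dy :=
  match e with
  | O => Dy n O
  | S e' => if Z.even n then dreduce_aux e' (Z.div2 n) else Dy n (S e')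
  end.
Definition dreduce (d : dy) : dy := dreduce_aux (dexp d) (dnum d).

Lemma dreduce_aux_spec e : forall n,
  dval (dreduce_aux e n) = IZR n / 2 ^ e /\ dreduced (dreduce_aux e n) /\
  (Z.abs (dnum (dreduce_aux e n)) <= Z.abs n)%Z /\ (dexp (dreduce_aux e n) <= e)%nat.
Proof.
  induction e as [|e IH]; intros n; simpl.
  - unfold dval, dreduced; simpl. repeat split; auto; lia.
  - destruct (Z.even n) eqn:He.
    + destruct (IH (Z.div2 n)) as [A [B [C D]]].
      assert (Hn : n = (2 * Z.div2 n)%Z).
      { rewrite (Z.div2_odd n) at 1. rewrite <- Z.negb_even, He. simpl. lia. }
      split; [|split; [auto|split; lia]].
      rewrite A. rewrite Hn at 2. rewrite mult_IZR. simpl.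
      pose proof (pow2_pos e). field. lra.
    + unfold dval, dreduced; simpl. repeat split; try lia.
      right. rewrite <- Z.negb_even, He. reflexivity.
Qed.

Lemma dval_dreduce d : dval (dreduce d) = dval d.
Proof. apply (dreduce_aux_spec (dexp d) (dnum d)). Qed.

Lemma dreduce_reduced d : dreduced (dreduce d).
Proof. apply (dreduce_aux_spec (dexp d) (dnum d)). Qed.

Lemma dy_bounded_dreduce B d : dy_bounded B d -> dy_bounded B (dreduce d).
Proof.
  unfold dreduce. destruct (dreduce_aux_spec (dexp d) (dnum d)) as [_ [_ [A C]]].
  intros [H1 H2]; split; lia.
Qed.

(** * Cell decompositions and minimal representations *)

Definition eval_line (u : dy * dy) (x : R) : R := dval (fst u) * x + dval (snd u).

Definition line_bounded (B : nat) (u : dy * dy) : Prop :=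
  dy_bounded B (fst u) /\ dy_bounded B (snd u).

(* [None] stands for -oo as a lower bound and for +oo as an upper bound. *)
Definition above (lo : option R) (x : R) : Prop :=
  match lo with None => True | Some a => a <= x end.
Definition strictly_above (lo : option R) (x : R) : Prop :=
  match lo with None => True | Some a => a < x end.
Definition below (hi : option R) (x : R) : Prop :=
  match hi with None => True | Some b => x < b end.

Definition affine_on (L : R -> R) (P : dy * dy -> Prop) (lo hi : option R) : Prop :=
  exists u, P u /\ forall x, above lo x -> below hi x -> L x = eval_line u x.

Fixpoint affine_on_cells (L : R -> R) (P : dy * dy -> Prop) (lo : option R) (ts : list dy)
    : Prop :=
  match ts with
  | [] => affine_on L P lo None
  | t :: ts' => affine_on L P lo (Some (dval t)) /\ affine_on_cells L P (Some (dval t)) ts'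
  end.

Lemma pl_eval_affine_on_cells L P ts : forall lo, affine_on_cells L P lo ts ->
  exists ps, length ps = S (length ts) /\ Forall P ps /\
    forall x, above lo x -> L x = pl_eval_aux ts ps x.
Proof.
  induction ts as [|t ts IH]; intros lo H; simpl in H.
  - destruct H as [[a b] [Pu Hu]]. exists [(a, b)]. repeat split; auto.
    intros x Hx. rewrite Hu; [reflexivity|auto|exact I].
  - destruct H as [[[a b] [Pu Hu]] H2]. destruct (IH _ H2) as [ps [A [B C]]].
    exists ((a, b) :: ps). split; [simpl; lia|]. split; [constructor; auto|].
    intros x Hx. simpl. destruct (Rlt_dec x (dval t)).
    + rewrite Hu; auto.
    + apply C. simpl. lra.
Qed.

Lemma strictly_increasing_cons (x : R) l : strictly_increasing (x :: l) <->
  (forall y, In y l -> x < y) /\ strictly_increasing l.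
Proof.
  revert x; induction l as [|y l IH]; intros x; simpl.
  - tauto.
  - split.
    + intros [H1 H2]. split; auto. apply IH in H2. destruct H2 as [H3 _].
      intros z [<-|Hz]; auto. specialize (H3 z Hz). lra.
    + intros [H1 H2]. split; auto.
Qed.

Definition same_line (u v : dy * dy) : bool :=
  if Req_dec_T (dval (fst u)) (dval (fst v)) then
    if Req_dec_T (dval (snd u)) (dval (snd v)) then true else false
  else false.

Lemma same_line_spec u v :
  same_line u v = true <-> dval (fst u) = dval (fst v) /\ dval (snd u) = dval (snd v).
Proof.
  unfold same_line.
  destruct (Req_dec_T (dval (fst u)) (dval (fst v))), (Req_dec_T (dval (snd u)) (dval (snd v)));
    split; intuition discriminate.
Qed.

(* Makes consecutive pieces distinct, as minimality of the representation requires. *)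
Fixpoint merge_pieces (ts : list dy) (ps : list (dy * dy)) : list dy * list (dy * dy) :=
  match ts, ps with
  | t :: ts', u :: ps' =>
      let (ts2, ps2) := merge_pieces ts' ps' in
      match ps2 with
      | v :: _ => if same_line u v then (ts2, ps2) else (t :: ts2, u :: ps2)
      | [] => (t :: ts2, u :: ps2)
      end
  | _, _ => (ts, ps)
  end.

Lemma pl_eval_aux_below ts v ps x : (forall y, In y ts -> x < dval y) ->
  pl_eval_aux ts (v :: ps) x = eval_line v x.
Proof.
  intros H. destruct v as [a b]. destruct ts as [|t ts]; simpl; auto.
  destruct (Rlt_dec x (dval t)) as [_|n]; auto. exfalso. apply n, H. left; auto.
Qed.

Lemma merge_pieces_spec ts : forall ps, length ps = S (length ts) ->
  strictly_increasing (map dval ts) ->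
  let m := merge_pieces ts ps in
  length (snd m) = S (length (fst m)) /\
  (length (fst m) <= length ts)%nat /\
  (forall t, In t (fst m) -> In t ts) /\
  (forall u, In u (snd m) -> In u ps) /\
  strictly_increasing (map dval (fst m)) /\
  consecutive_distinct (snd m) /\
  (forall x, pl_eval_aux (fst m) (snd m) x = pl_eval_aux ts ps x).
Proof.
  induction ts as [|t ts IH]; intros ps Hl Hs.
  - destruct ps as [|[a b] [|]]; simpl in Hl; try lia. simpl. repeat split; auto.
  - destruct ps as [|u ps]; simpl in Hl; [lia|].
    simpl map in Hs. apply strictly_increasing_cons in Hs. destruct Hs as [Hs1 Hs2].
    destruct (IH ps ltac:(lia) Hs2) as [A [B [C [D [E [F G]]]]]].
    simpl. destruct (merge_pieces ts ps) as [ts2 ps2]. simpl in *.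
    destruct ps2 as [|[a' b'] ps3]; [simpl in A; lia|].
    destruct u as [a b]. destruct (same_line (a, b) (a', b')) eqn:Hsame.
    + apply same_line_spec in Hsame. destruct Hsame as [Ea Eb]. simpl in Ea, Eb.
      simpl. repeat split; auto; try lia.
      intros x. destruct (Rlt_dec x (dval t)); [|apply G].
      rewrite pl_eval_aux_below.
      * unfold eval_line. cbn [fst snd]. rewrite Ea, Eb. reflexivity.
      * intros y Hy. apply C in Hy. specialize (Hs1 (dval y) (in_map _ _ _ Hy)). lra.
    + assert (Hd : ~ (dval a = dval a' /\ dval b = dval b'))
        by (rewrite <- (same_line_spec (a, b) (a', b')); congruence).
      simpl. repeat split; auto; try lia.
      * intros t0 [<-|Ht0]; auto.
      * intros u0 [<-|Hu0]; auto.
      * apply strictly_increasing_cons. split; auto. intros y Hy. apply in_map_iff in Hy.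
        destruct Hy as [d [<- Hd']]. apply C in Hd'. apply Hs1. apply in_map; auto.
      * destruct (Req_dec (dval a) (dval a')); [right|left]; auto.
      * intros x. destruct (Rlt_dec x (dval t)); auto.
Qed.

Definition dreduce_line (u : dy * dy) : dy * dy := (dreduce (fst u), dreduce (snd u)).

Lemma pl_eval_aux_dreduce ts : forall ps x,
  pl_eval_aux (map dreduce ts) (map dreduce_line ps) x = pl_eval_aux ts ps x.
Proof.
  induction ts as [|t ts IH]; intros ps x; destruct ps as [|[a b] ps]; simpl; auto;
    rewrite !dval_dreduce; auto.
  destruct (Rlt_dec x (dval t)); auto.
Qed.

Lemma map_dval_dreduce ts : map dval (map dreduce ts) = map dval ts.
Proof. rewrite map_map. apply map_ext, dval_dreduce. Qed.

Lemma pl_bitsize_bounded B ts ps : Forall (dy_bounded B) ts -> Forall (line_bounded B) ps ->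
  (pl_bitsize (PLRep ts ps) <= (length ts + 2 * length ps) * (2 * B + 3))%nat.
Proof.
  intros H1 H2. unfold pl_bitsize; cbn [thr pcs].
  assert (fold_right (fun t s => (bs_dy t + s)%nat) 0%nat ts <= length ts * (2 * B + 3))%nat.
  { induction H1 as [|x l Hx Hl IHl]; cbn [fold_right length]; [lia|].
    pose proof (bs_dy_bounded _ _ Hx). lia. }
  assert (fold_right (fun p s => (bs_dy (fst p) + bs_dy (snd p) + s)%nat) 0%nat ps
          <= length ps * (2 * (2 * B + 3)))%nat.
  { induction H2 as [|x l [Ha Hb] Hl IHl]; cbn [fold_right length]; [lia|].
    pose proof (bs_dy_bounded _ _ Ha). pose proof (bs_dy_bounded _ _ Hb). lia. }
  lia.
Qed.

Lemma Forall_map_in {A B} (f : A -> B) (P : A -> Prop) (Q : B -> Prop) l l' :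
  (forall x, P x -> Q (f x)) -> Forall P l -> (forall y, In y l' -> In y (map f l)) ->
  Forall Q l'.
Proof.
  intros HPQ HP Hl'. apply Forall_forall. intros y Hy.
  apply Hl', in_map_iff in Hy. destruct Hy as [x [<- Hx]].
  apply HPQ. rewrite Forall_forall in HP. auto.
Qed.

(* Threshold reduction and merging of equal neighbours turn any such cell
   decomposition into a minimal representation. *)
Lemma rpl_of_size_affine_on_cells L ts B :
  strictly_increasing (map dval ts) -> Forall (dy_bounded B) ts ->
  affine_on_cells L (line_bounded B) None ts ->
  rpl_of_size L ((3 * length ts + 2) * (2 * B + 3)).
Proof.
  intros Hs Hb Hc.
  destruct (pl_eval_affine_on_cells L (line_bounded B) ts None Hc) as [ps [Hl [Hp He]]].
  set (ts1 := map dreduce ts). set (ps1 := map dreduce_line ps).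
  assert (Hl1 : length ps1 = S (length ts1)) by (unfold ps1, ts1; rewrite !length_map; auto).
  assert (Hs1 : strictly_increasing (map dval ts1)) by (unfold ts1; rewrite map_dval_dreduce; auto).
  destruct (merge_pieces_spec ts1 ps1 Hl1 Hs1) as [A [Hlen [C [D [E [F G]]]]]].
  destruct (merge_pieces ts1 ps1) as [ts2 ps2]. simpl in *.
  unfold ts1 in Hlen. rewrite length_map in Hlen.
  exists (PLRep ts2 ps2). split; [|split].
  - unfold pl_wf; simpl. repeat split; auto.
    + eapply (Forall_map_in dreduce (fun _ => True)); [intros; apply dreduce_reduced| |exact C].
      apply Forall_forall; auto.
    + eapply (Forall_map_in dreduce_line (fun _ => True)); [|apply Forall_forall; auto|exact D].
      intros; split; apply dreduce_reduced.
  - intros x. unfold pl_eval; simpl. rewrite G. unfold ts1, ps1. rewrite pl_eval_aux_dreduce.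
    apply He. exact I.
  - eapply Nat.le_trans; [apply (pl_bitsize_bounded B)|].
    + eapply Forall_map_in; [apply dy_bounded_dreduce|exact Hb|exact C].
    + eapply Forall_map_in; [|exact Hp|exact D].
      intros u [H1 H2]; split; apply dy_bounded_dreduce; auto.
    + nia.
Qed.

Lemma rpl_of_size_mono L s s' : (s <= s')%nat -> rpl_of_size L s -> rpl_of_size L s'.
Proof. intros H [r [A [B C]]]. exists r. split; [auto|split; [auto|lia]]. Qed.

(** * Minima of maxima of lines *)

Section MaxOver.
Context {A : Type}.

Definition max_over (F : A -> R) (a : A) (l : list A) : R :=
  fold_right (fun b acc => Rmax (F b) acc) (F a) l.

Definition min_over (F : A -> R) (a : A) (l : list A) : R :=
  - max_over (fun b => - F b) a l.

Lemma max_over_ge F a l b : In b (a :: l) -> F b <= max_over F a l.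
Proof.
  induction l as [|c l IH]; simpl.
  - intros [<-|[]]. lra.
  - intros [<-|[<-|H]].
    + eapply Rle_trans; [apply IH; left; auto|apply Rmax_r].
    + apply Rmax_l.
    + eapply Rle_trans; [apply IH; right; auto|apply Rmax_r].
Qed.

Lemma max_over_attained F a l : exists b, In b (a :: l) /\ max_over F a l = F b.
Proof.
  induction l as [|c l IH]; simpl.
  - exists a; auto.
  - destruct IH as [b [Hb E]]. rewrite E. unfold Rmax.
    destruct (Rle_dec (F c) (F b)); [exists b; simpl in *; tauto|exists c; auto].
Qed.

Lemma max_over_le F a l r : (forall b, In b (a :: l) -> F b <= r) -> max_over F a l <= r.
Proof. intros H. destruct (max_over_attained F a l) as [b [Hb ->]]. auto. Qed.

Lemma max_over_close F G a l K :
  (forall b, In b (a :: l) -> Rabs (F b - G b) <= K) ->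
  Rabs (max_over F a l - max_over G a l) <= K.
Proof.
  induction l as [|c l IH]; simpl; intros H; [apply H; auto|].
  assert (Hc : Rabs (F c - G c) <= K) by auto.
  assert (Hl : Rabs (max_over F a l - max_over G a l) <= K) by (apply IH; simpl in *; intuition).
  unfold Rmax. destruct (Rle_dec _ _), (Rle_dec _ _); split_Rabs; lra.
Qed.

Lemma max_over_uniform (F : A -> R -> R) (S : R -> Prop) a l :
  (forall b c, In b (a :: l) -> In c (a :: l) ->
     (forall x, S x -> F b x <= F c x) \/ (forall x, S x -> F c x <= F b x)) ->
  exists b, In b (a :: l) /\ forall x, S x -> max_over (fun b => F b x) a l = F b x.
Proof.
  induction l as [|c l IH]; simpl; intros Hord.
  - exists a; auto.
  - destruct IH as [b [Hb E]]; [intros; apply Hord; simpl in *; tauto|].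
    destruct (Hord b c) as [H|H]; simpl in *; try tauto.
    + exists c. split; [tauto|]. intros x Hx. rewrite E by auto. apply Rmax_left, H, Hx.
    + exists b. split; [tauto|]. intros x Hx. rewrite E by auto. apply Rmax_right, H, Hx.
Qed.

Lemma min_over_le F a l b : In b (a :: l) -> min_over F a l <= F b.
Proof.
  intros H. unfold min_over. pose proof (max_over_ge (fun b => - F b) a l b H). simpl in *. lra.
Qed.

Lemma min_over_attained F a l : exists b, In b (a :: l) /\ min_over F a l = F b.
Proof.
  destruct (max_over_attained (fun b => - F b) a l) as [b [Hb E]].
  exists b. unfold min_over. rewrite E. split; auto. lra.
Qed.

Lemma min_over_close F G a l K :
  (forall b, In b (a :: l) -> Rabs (F b - G b) <= K) ->
  Rabs (min_over F a l - min_over G a l) <= K.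
Proof.
  intros H. unfold min_over. rewrite <- Rabs_Ropp.
  replace (- (- max_over (fun b => - F b) a l - - max_over (fun b => - G b) a l))
    with (max_over (fun b => - F b) a l - max_over (fun b => - G b) a l) by ring.
  apply max_over_close. intros b Hb. rewrite <- Rabs_Ropp.
  replace (- (- F b - - G b)) with (F b - G b) by ring. auto.
Qed.

Lemma min_over_uniform (F : A -> R -> R) (S : R -> Prop) a l :
  (forall b c, In b (a :: l) -> In c (a :: l) ->
     (forall x, S x -> F b x <= F c x) \/ (forall x, S x -> F c x <= F b x)) ->
  exists b, In b (a :: l) /\ forall x, S x -> min_over (fun b => F b x) a l = F b x.
Proof.
  intros Hord.
  destruct (max_over_uniform (fun b x => - F b x) S a l) as [b [Hb E]].
  { intros b c Hb Hc. destruct (Hord b c Hb Hc) as [H|H];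
      [right|left]; intros x Hx; specialize (H x Hx); lra. }
  exists b. split; auto. intros x Hx. unfold min_over. rewrite E by auto. ring.
Qed.

End MaxOver.

Definition group : Type := ((dy * dy) * list (dy * dy))%type.
Definition group_lines (g : group) : list (dy * dy) := fst g :: snd g.
Definition group_max (g : group) (x : R) : R :=
  max_over (fun v => eval_line v x) (fst g) (snd g).

Definition min_max (gl : list group) (x : R) : R :=
  match gl with
  | [] => 0
  | g :: gs => min_over (fun g' => group_max g' x) g gs
  end.

Definition all_lines (gl : list group) : list (dy * dy) := flat_map group_lines gl.

Lemma in_all_lines gl g v : In g gl -> In v (group_lines g) -> In v (all_lines gl).
Proof. intros. apply in_flat_map. eauto. Qed.

Lemma group_max_ge g v x : In v (group_lines g) -> eval_line v x <= group_max g x.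
Proof. apply (max_over_ge (fun v => eval_line v x)). Qed.

Lemma group_max_le g x r :
  (forall v, In v (group_lines g) -> eval_line v x <= r) -> group_max g x <= r.
Proof. apply (max_over_le (fun v => eval_line v x)). Qed.

Lemma min_max_le gl g x : In g gl -> min_max gl x <= group_max g x.
Proof.
  destruct gl as [|g0 gs]; [intros []|]. apply (min_over_le (fun g => group_max g x)).
Qed.

Lemma min_max_attained gl x : gl <> [] -> exists g, In g gl /\ min_max gl x = group_max g x.
Proof.
  destruct gl as [|g0 gs]; [tauto|]. intros _. apply (min_over_attained (fun g => group_max g x)).
Qed.

Lemma min_max_attained_line gl x : gl <> [] ->
  exists v, In v (all_lines gl) /\ min_max gl x = eval_line v x.
Proof.
  intros H. destruct (min_max_attained gl x H) as [g [Hg ->]].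
  destruct (max_over_attained (fun v => eval_line v x) (fst g) (snd g)) as [v [Hv E]].
  exists v. split; [eapply in_all_lines; eauto|exact E].
Qed.

Lemma eval_line_lipschitz v x y Lam : Rabs (dval (fst v)) <= Lam ->
  Rabs (eval_line v x - eval_line v y) <= Lam * Rabs (x - y).
Proof.
  intros H. unfold eval_line.
  replace (dval (fst v) * x + dval (snd v) - (dval (fst v) * y + dval (snd v)))
    with (dval (fst v) * (x - y)) by ring.
  rewrite Rabs_mult. apply Rmult_le_compat_r; auto. apply Rabs_pos.
Qed.

Lemma min_max_lipschitz gl Lam : 0 <= Lam ->
  (forall v, In v (all_lines gl) -> Rabs (dval (fst v)) <= Lam) ->
  lipschitz Lam (min_max gl).
Proof.
  intros H0 H x y. destruct gl as [|g0 gs]; simpl.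
  - rewrite Rminus_0_r, Rabs_R0. apply Rmult_le_pos; [auto|apply Rabs_pos].
  - apply min_over_close. intros g Hg. apply max_over_close. intros v Hv.
    apply eval_line_lipschitz, H. eapply in_all_lines; eauto.
Qed.

Definition crossing (v w : dy * dy) : list R :=
  if Req_dec_T (dval (fst v)) (dval (fst w)) then []
  else [(dval (snd w) - dval (snd v)) / (dval (fst v) - dval (fst w))].

Definition crossings (gl : list group) : list R :=
  flat_map (fun v => flat_map (fun w => crossing v w) (all_lines gl)) (all_lines gl).

Lemma crossing_between v w x1 x2 :
  eval_line v x1 < eval_line w x1 -> eval_line w x2 < eval_line v x2 ->
  exists z, In z (crossing v w) /\ Rmin x1 x2 < z < Rmax x1 x2.
Proof.
  intros H1 H2. unfold crossing, eval_line in *.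
  set (a := dval (fst v)) in *. set (a' := dval (fst w)) in *.
  set (b := dval (snd v)) in *. set (b' := dval (snd w)) in *.
  destruct (Req_dec_T a a') as [E|E]; [rewrite E in *; lra|].
  set (z := (b' - b) / (a - a')). exists z. split; [left; auto|].
  assert (Hz : forall x, (a - a') * (x - z) = a * x + b - (a' * x + b'))
    by (intros; unfold z; field; lra).
  pose proof (Hz x1). pose proof (Hz x2).
  unfold Rmin, Rmax. destruct (Rle_dec x1 x2); destruct (Rlt_dec 0 (a - a')); nra.
Qed.

Definition in_cell (lo hi : option R) (x : R) : Prop := above lo x /\ below hi x.

Definition no_crossing_in (gl : list group) (lo hi : option R) : Prop :=
  forall z, In z (crossings gl) -> ~ (strictly_above lo z /\ below hi z).

Lemma lines_ordered_in_cell gl lo hi v w : no_crossing_in gl lo hi ->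
  In v (all_lines gl) -> In w (all_lines gl) ->
  (forall x, in_cell lo hi x -> eval_line v x <= eval_line w x) \/
  (forall x, in_cell lo hi x -> eval_line w x <= eval_line v x).
Proof.
  intros HN Hv Hw.
  destruct (classic (forall x, in_cell lo hi x -> eval_line v x <= eval_line w x)) as [H|H];
    [left; auto|right].
  apply not_all_ex_not in H. destruct H as [x1 H]. apply imply_to_and in H.
  destruct H as [[A1 B1] H]. apply Rnot_le_lt in H.
  intros x2 [A2 B2]. apply Rnot_lt_le. intros H2.
  destruct (crossing_between v w x2 x1 H2 H) as [z [Hz [Hz1 Hz2]]].
  apply (HN z).
  - apply in_flat_map. exists v. split; auto. apply in_flat_map. exists w. auto.
  - unfold Rmin, Rmax in *. split.
    + destruct lo as [l|]; simpl in *; auto. destruct (Rle_dec x2 x1); lra.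
    + destruct hi as [h|]; simpl in *; auto. destruct (Rle_dec x2 x1); lra.
Qed.

Lemma min_max_affine_in_cell gl lo hi : gl <> [] -> no_crossing_in gl lo hi ->
  exists u, In u (all_lines gl) /\ forall x, in_cell lo hi x -> min_max gl x = eval_line u x.
Proof.
  intros Hne HN.
  assert (Hg : forall g, In g gl -> exists u, In u (all_lines gl) /\
            forall x, in_cell lo hi x -> group_max g x = eval_line u x).
  { intros g Hg.
    destruct (max_over_uniform (fun v x => eval_line v x) (in_cell lo hi) (fst g) (snd g))
      as [u [Hu E]].
    { intros b c Hb Hc. apply (lines_ordered_in_cell gl); auto; eapply in_all_lines; eauto. }
    exists u. split; [eapply in_all_lines; eauto|exact E]. }
  destruct gl as [|g0 gs]; [tauto|].
  destruct (min_over_uniform group_max (in_cell lo hi) g0 gs) as [g [Hgin E]].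
  - intros b c Hb Hc.
    destruct (Hg b Hb) as [u [Hu Eu]], (Hg c Hc) as [w [Hw Ew]].
    destruct (lines_ordered_in_cell _ lo hi u w HN Hu Hw) as [C|C];
      [left|right]; intros x Hx; rewrite Eu, Ew by auto; auto.
  - destruct (Hg g Hgin) as [u [Hu Eu]]. exists u. split; auto.
    intros x Hx. simpl. rewrite E, Eu; auto.
Qed.

(** * The Lipschitz envelope of a piecewise linear function *)

Definition dzero : dy := Dy 0 0.
Definition line_at (u : dy * dy) (t : dy) : dy := dadd (dmul (fst u) t) (snd u).
Definition line_through (a t v : dy) : dy * dy := (a, dsub v (dmul a t)).

Lemma dval_line_at u t : dval (line_at u t) = eval_line u (dval t).
Proof. unfold line_at, eval_line. rewrite dval_add, dval_mul. reflexivity. Qed.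

Lemma eval_line_through a t v x :
  eval_line (line_through a t v) x = dval v + dval a * (x - dval t).
Proof. unfold eval_line, line_through; simpl. rewrite dval_sub, dval_mul. ring. Qed.

Lemma line_at_bounded B u t :
  line_bounded B u -> dy_bounded B t -> dy_bounded (4 * B + 1) (line_at u t).
Proof.
  intros [Ha Hb] Ht. unfold line_at. replace (4 * B + 1)%nat with (2 * (2 * B) + 1)%nat by lia.
  apply dy_bounded_add; [apply dy_bounded_mul; auto|]. eapply dy_bounded_mono; [|eauto]; lia.
Qed.

Lemma line_through_bounded B a t v : dy_bounded B a -> dy_bounded B t -> dy_bounded B v ->
  line_bounded (4 * B + 1) (line_through a t v).
Proof.
  intros Ha Ht Hv. split; cbn [fst snd line_through]; [eapply dy_bounded_mono; [|eauto]; lia|].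
  replace (4 * B + 1)%nat with (2 * (2 * B) + 1)%nat by lia.
  apply dy_bounded_sub; [eapply dy_bounded_mono; [|eauto]; lia|apply dy_bounded_mul; auto].
Qed.

(* The group with maximum [x |-> u(t) + Lm |x - t|]. *)
Definition cone (Lm t : dy) (u : dy * dy) : group :=
  (line_through Lm t (line_at u t), [line_through (dopp Lm) t (line_at u t)]).

Definition anchor (o1 o2 : option dy) : dy :=
  match o1, o2 with Some t, _ => t | None, Some t => t | None, None => dzero end.

(* For a piece [u] of [g] on the cell [lo, hi), the maximum of this group is
   [x |-> min_{lo <= y <= hi} (u(y) + Lm |x - y|)] whenever that minimum exists. *)
Definition piece_group (Lm : dy) (lo hi : option dy) (u : dy * dy) : group :=
  if Rle_dec (Rabs (dval (fst u))) (dval Lm) then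
    (u, match hi with Some t => [line_through Lm t (line_at u t)] | None => [] end ++
        match lo with Some t => [line_through (dopp Lm) t (line_at u t)] | None => [] end)
  else if Rlt_dec 0 (dval (fst u)) then cone Lm (anchor lo hi) u
  else cone Lm (anchor hi lo) u.

Fixpoint piece_groups (Lm : dy) (lo : option dy) (ts : list dy) (ps : list (dy * dy))
    : list group :=
  match ts, ps with
  | t :: ts', u :: ps' => piece_group Lm lo (Some t) u :: piece_groups Lm (Some t) ts' ps'
  | [], u :: _ => [piece_group Lm lo None u]
  | _, [] => []
  end.

Definition odval (o : option dy) : option R := option_map dval o.

Definition in_closed_cell (lo hi : option R) (y : R) : Prop :=
  above lo y /\ match hi with None => True | Some h => y <= h end.

Definition ordered_bounds (lo hi : option R) : Prop :=
  match lo, hi with Some l, Some h => l < h | _, _ => True end.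

Lemma cone_max_ge Lm t u x : 0 <= dval Lm ->
  eval_line u (dval t) + dval Lm * Rabs (x - dval t) <= group_max (cone Lm t u) x.
Proof.
  intros HL. rewrite <- dval_line_at. destruct (Rle_dec (dval t) x).
  - eapply Rle_trans; [|apply (group_max_ge _ (line_through Lm t (line_at u t))); left; auto].
    rewrite eval_line_through, Rabs_right by lra. lra.
  - eapply Rle_trans;
      [|apply (group_max_ge _ (line_through (dopp Lm) t (line_at u t))); right; left; auto].
    rewrite eval_line_through, dval_opp, Rabs_left by lra. lra.
Qed.

Lemma in_closed_cell_anchor lo hi :
  ordered_bounds (odval lo) (odval hi) ->
  in_closed_cell (odval lo) (odval hi) (dval (anchor lo hi)) /\
  in_closed_cell (odval lo) (odval hi) (dval (anchor hi lo)).
Proof.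
  destruct lo as [l|], hi as [h|]; simpl; unfold in_closed_cell; simpl; intros; lra.
Qed.

Lemma flat_group_max_ge Lm lo hi u x : 0 <= dval Lm ->
  Rabs (dval (fst u)) <= dval Lm -> ordered_bounds (odval lo) (odval hi) ->
  exists y0, in_closed_cell (odval lo) (odval hi) y0 /\
    eval_line u y0 + dval Lm * Rabs (x - y0) <= group_max (piece_group Lm lo hi u) x.
Proof.
  intros HL Hs Hord. unfold piece_group.
  destruct (Rle_dec _ _) as [_|]; [|lra].
  set (g := (u, _)).
  destruct (classic (exists l, lo = Some l /\ x < dval l)) as [[l [-> Hxl]]|Hlo].
  { exists (dval l). split.
    - split; simpl; [lra|]. destruct hi as [h|]; simpl in *; lra.
    - eapply Rle_trans; [|apply (group_max_ge g (line_through (dopp Lm) l (line_at u l)))].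
      + rewrite eval_line_through, dval_opp, dval_line_at, Rabs_left by lra. lra.
      + right. apply in_or_app. right. left. reflexivity. }
  destruct (classic (exists h, hi = Some h /\ dval h < x)) as [[h [-> Hxh]]|Hhi].
  { exists (dval h). split.
    - split; simpl; [|lra]. destruct lo as [l|]; simpl in *; [|auto]. lra.
    - eapply Rle_trans; [|apply (group_max_ge g (line_through Lm h (line_at u h)))].
      + rewrite eval_line_through, dval_line_at, Rabs_right by lra. lra.
      + right. apply in_or_app. left. left. reflexivity. }
  exists x. split.
  - split; [destruct lo as [l|]|destruct hi as [h|]]; simpl; auto;
      apply Rnot_lt_le; intro; [apply Hlo|apply Hhi]; eauto.
  - eapply Rle_trans; [|apply (group_max_ge g u); left; reflexivity].
    rewrite Rminus_diag, Rabs_R0. lra.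
Qed.

Lemma piece_group_max_ge Lm lo hi u x : 0 <= dval Lm ->
  ordered_bounds (odval lo) (odval hi) ->
  exists y0, in_closed_cell (odval lo) (odval hi) y0 /\
    eval_line u y0 + dval Lm * Rabs (x - y0) <= group_max (piece_group Lm lo hi u) x.
Proof.
  intros HL Hord.
  destruct (Rle_dec (Rabs (dval (fst u))) (dval Lm)) as [Hs|Hs];
    [apply flat_group_max_ge; auto|].
  destruct (in_closed_cell_anchor lo hi Hord) as [A1 A2].
  unfold piece_group. destruct (Rle_dec _ _); [tauto|].
  destruct (Rlt_dec 0 (dval (fst u))); eexists; (split; [|apply cone_max_ge; auto]); auto.
Qed.

Lemma piece_group_max_le Lm lo hi u x : 0 <= dval Lm ->
  above (odval lo) x -> below (odval hi) x ->
  (lo = None -> dval (fst u) <= dval Lm) -> (hi = None -> - dval Lm <= dval (fst u)) ->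
  group_max (piece_group Lm lo hi u) x <= eval_line u x.
Proof.
  intros HL Hlo Hhi H1 H2. unfold piece_group. apply group_max_le. intros v Hv.
  destruct u as [a b]. unfold eval_line at 2; simpl fst in *; simpl snd in *.
  destruct (Rle_dec (Rabs (dval a)) (dval Lm)) as [Hs|Hs].
  - assert (Habs : - dval Lm <= dval a <= dval Lm) by (split_Rabs; lra).
    destruct Hv as [<-|Hv]; [unfold eval_line; simpl; lra|].
    apply in_app_or in Hv. destruct Hv as [Hv|Hv].
    + destruct hi as [h|]; simpl in Hv; [|tauto]. destruct Hv as [<-|[]].
      rewrite eval_line_through, dval_line_at. unfold eval_line; simpl in *. nra.
    + destruct lo as [l|]; simpl in Hv; [|tauto]. destruct Hv as [<-|[]].
      rewrite eval_line_through, dval_opp, dval_line_at. unfold eval_line; simpl in *. nra.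
  - destruct (Rlt_dec 0 (dval a)) as [Hp|Hp].
    + destruct lo as [l|]; [|specialize (H1 eq_refl); simpl in H1; split_Rabs; lra].
      simpl in Hlo. assert (dval Lm < dval a) by (split_Rabs; lra).
      unfold cone, group_lines in Hv; simpl in Hv.
      destruct Hv as [<-|[<-|[]]]; rewrite eval_line_through, ?dval_opp, dval_line_at;
        unfold eval_line; simpl; nra.
    + destruct hi as [h|]; [|specialize (H2 eq_refl); simpl in H2; split_Rabs; lra].
      simpl in Hhi. assert (dval a < - dval Lm) by (split_Rabs; lra).
      unfold cone, group_lines in Hv; simpl in Hv.
      destruct Hv as [<-|[<-|[]]]; rewrite eval_line_through, ?dval_opp, dval_line_at;
        unfold eval_line; simpl; nra.
Qed.

Definition lipschitz_up_to (G E : R -> R) (Lam : R) : Prop :=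
  forall x y, G x <= G y + Lam * Rabs (x - y) + E x.

Lemma le_of_le_plus_small c d K eta0 : 0 <= K -> 0 < eta0 ->
  (forall eta, 0 < eta < eta0 -> c <= d + K * eta) -> c <= d.
Proof.
  intros HK H0 H. apply le_epsilon. intros e He.
  set (eta := Rmin (eta0 / 2) (e / (K + 1))).
  assert (0 < eta) by (apply Rmin_glb_lt; apply Rdiv_lt_0_compat; lra).
  assert (eta <= eta0 / 2) by apply Rmin_l.
  assert (Hk : K * eta <= e).
  { apply Rle_trans with ((K + 1) * (e / (K + 1))); [|right; field; lra].
    apply Rmult_le_compat; try lra. apply Rmin_r. }
  specialize (H eta ltac:(lra)). lra.
Qed.

(* Also at the excluded right end of the cell, by approaching it from the left. *)
Lemma lipschitz_up_to_closed_cell G E Lam lo hi u :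
  0 <= Lam -> lipschitz_up_to G E Lam -> ordered_bounds lo hi ->
  (forall y, in_cell lo hi y -> G y = eval_line u y) ->
  forall y0 x, in_closed_cell lo hi y0 -> G x - E x <= eval_line u y0 + Lam * Rabs (x - y0).
Proof.
  intros HL HG Hord Hu y0 x [Hc1 Hc2].
  destruct (classic (below hi y0)) as [Hb|Hb].
  - rewrite <- Hu by (split; auto). specialize (HG x y0). lra.
  - destruct hi as [h|]; simpl in Hb; [|tauto]. simpl in Hc2.
    assert (y0 = h) by lra. subst y0.
    set (a := dval (fst u)).
    apply (le_of_le_plus_small _ _ (Rabs a + Lam)
             (match lo with Some l => h - l | None => 1 end)).
    + pose proof (Rabs_pos a). lra.
    + destruct lo as [l|]; simpl in *; lra.
    + intros eta Heta.
      assert (Hy : in_cell lo (Some h) (h - eta))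
        by (split; [destruct lo as [l|]; simpl in *|simpl]; lra).
      specialize (HG x (h - eta)). rewrite (Hu _ Hy) in HG.
      assert (eval_line u (h - eta) <= eval_line u h + Rabs a * eta).
      { unfold eval_line. fold a. pose proof (Rle_abs (- a)). rewrite Rabs_Ropp in *. nra. }
      assert (Rabs (x - (h - eta)) <= Rabs (x - h) + eta).
      { replace (x - (h - eta)) with ((x - h) + eta) by ring.
        eapply Rle_trans; [apply Rabs_triang|]. rewrite (Rabs_right eta) by lra. lra. }
      nra.
Qed.

Lemma lipschitz_up_to_slope_le G E Lam hi u :
  lipschitz_up_to G E Lam -> (forall x, 0 <= E x) ->
  (forall y, below hi y -> G y = eval_line u y) -> dval (fst u) <= Lam.
Proof.
  intros HG HE Hu. apply Rnot_lt_le. intros Hlt.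
  set (x := match hi with Some h => h - 1 | None => 0 end).
  assert (Hx : forall d, 0 <= d -> below hi (x - d)) by (intros; unfold x; destruct hi; simpl; lra).
  set (D := (E x + 1) / (dval (fst u) - Lam)).
  assert (HD : 0 < D) by (apply Rdiv_lt_0_compat; [specialize (HE x)|]; lra).
  specialize (HG x (x - D)).
  assert (below hi x) by (unfold x; destruct hi; simpl; lra).
  rewrite (Hu x), (Hu (x - D)) in HG by (auto; apply Hx; lra).
  replace (x - (x - D)) with D in HG by ring. rewrite Rabs_right in HG by lra.
  assert ((dval (fst u) - Lam) * D = E x + 1) by (unfold D; field; lra).
  unfold eval_line in HG. nra.
Qed.

Lemma lipschitz_up_to_slope_ge G E Lam lo u :
  lipschitz_up_to G E Lam -> (forall x, 0 <= E x) ->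
  (forall y, above lo y -> G y = eval_line u y) -> - Lam <= dval (fst u).
Proof.
  intros HG HE Hu. apply Rnot_lt_le. intros Hlt.
  set (x := match lo with Some l => l | None => 0 end).
  assert (Hx : forall d, 0 <= d -> above lo (x + d)) by (intros; unfold x; destruct lo; simpl; lra).
  set (D := (E x + 1) / (- dval (fst u) - Lam)).
  assert (HD : 0 < D) by (apply Rdiv_lt_0_compat; [specialize (HE x)|]; lra).
  specialize (HG x (x + D)).
  assert (above lo x) by (unfold x; destruct lo; simpl; lra).
  rewrite (Hu x), (Hu (x + D)) in HG by (auto; apply Hx; lra).
  replace (x - (x + D)) with (- D) in HG by ring. rewrite Rabs_Ropp, Rabs_right in HG by lra.
  assert ((- dval (fst u) - Lam) * D = E x + 1) by (unfold D; field; lra).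
  unfold eval_line in HG. nra.
Qed.

Definition pl_agrees_from (G : R -> R) (lo : option dy) (ts : list dy) (ps : list (dy * dy))
    : Prop :=
  (forall y, above (odval lo) y -> pl_eval_aux ts ps y = G y) /\
  strictly_increasing (map dval ts) /\
  (forall l, lo = Some l -> forall t, In t ts -> dval l < dval t) /\
  length ps = S (length ts).

Lemma pl_agrees_from_cons G lo t ts u ps : pl_agrees_from G lo (t :: ts) (u :: ps) ->
  pl_agrees_from G (Some t) ts ps /\ ordered_bounds (odval lo) (Some (dval t)) /\
  (forall y, in_cell (odval lo) (Some (dval t)) y -> G y = eval_line u y).
Proof.
  intros [H1 [H2 [H3 H4]]]. simpl in H2. apply strictly_increasing_cons in H2.
  destruct H2 as [H2a H2b].
  assert (Hlt : ordered_bounds (odval lo) (Some (dval t)))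
    by (destruct lo as [l|]; simpl; auto; apply (H3 l eq_refl t); left; auto).
  split; [|split; [auto|]].
  - split; [|split; [auto|split]].
    + intros y Hy. simpl in Hy. rewrite <- H1.
      * destruct u as [a b]. simpl. destruct (Rlt_dec y (dval t)); [lra|auto].
      * destruct lo as [l|]; simpl in *; auto; lra.
    + intros l [= <-] t0 Ht0. apply H2a. apply in_map; auto.
    + simpl in H4. lia.
  - intros y [Hy1 Hy2]. rewrite <- H1 by auto. destruct u as [a b]. simpl in *.
    destruct (Rlt_dec y (dval t)); [auto|lra].
Qed.

Lemma pl_agrees_from_last G lo u ps : pl_agrees_from G lo [] (u :: ps) ->
  forall y, above (odval lo) y -> G y = eval_line u y.
Proof. intros [H1 _] y Hy. rewrite <- H1 by auto. destruct u; reflexivity. Qed.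

Section PieceGroups.
Variables (G E : R -> R) (Lm : dy).
Hypotheses (HLm : 0 <= dval Lm) (HG : lipschitz_up_to G E (dval Lm)).

Lemma piece_groups_max_le (HE : forall x, 0 <= E x) ts : forall lo ps,
  pl_agrees_from G lo ts ps -> forall x, above (odval lo) x ->
  exists g, In g (piece_groups Lm lo ts ps) /\ group_max g x <= G x.
Proof.
  induction ts as [|t ts IH]; intros lo ps HI x Hx;
    (destruct ps as [|u ps]; [destruct HI as [_ [_ [_ H]]]; discriminate|]).
  - pose proof (pl_agrees_from_last G lo u ps HI) as Hu.
    exists (piece_group Lm lo None u). split; [left; auto|].
    rewrite Hu by auto. apply piece_group_max_le; [auto|auto|exact I| |].
    + intros ->. apply (lipschitz_up_to_slope_le G E _ None u); auto.
    + intros _. apply (lipschitz_up_to_slope_ge G E _ (odval lo) u); auto.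
  - destruct (pl_agrees_from_cons G lo t ts u ps HI) as [HI' [Hord Hu]].
    destruct (Rlt_dec x (dval t)) as [Hxt|Hxt].
    + exists (piece_group Lm lo (Some t) u). split; [left; auto|].
      rewrite Hu by (split; auto). apply piece_group_max_le; auto; [|discriminate].
      intros ->. apply (lipschitz_up_to_slope_le G E _ (Some (dval t)) u); auto.
      intros y Hy. apply Hu. split; [exact I|auto].
    + destruct (IH (Some t) ps HI' x) as [g [Hg1 Hg2]]; [simpl; lra|].
      exists g. split; auto. right; auto.
Qed.

Lemma piece_groups_max_ge ts : forall lo ps, pl_agrees_from G lo ts ps ->
  forall g, In g (piece_groups Lm lo ts ps) -> forall x, G x - E x <= group_max g x.
Proof.
  induction ts as [|t ts IH]; intros lo ps HI g Hg x;
    (destruct ps as [|u ps]; [destruct HI as [_ [_ [_ H]]]; discriminate|]).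
  - pose proof (pl_agrees_from_last G lo u ps HI) as Hu.
    destruct Hg as [<-|[]].
    assert (Hord : ordered_bounds (odval lo) (odval None)) by (destruct lo; exact I).
    destruct (piece_group_max_ge Lm lo None u x HLm Hord) as [y0 [Hy0 Hle]].
    eapply Rle_trans; [|exact Hle].
    apply (lipschitz_up_to_closed_cell G E _ (odval lo) None u); auto.
    intros y [Hy _]. auto.
  - destruct (pl_agrees_from_cons G lo t ts u ps HI) as [HI' [Hord Hu]].
    destruct Hg as [<-|Hg]; [|eapply IH; eauto].
    destruct (piece_group_max_ge Lm lo (Some t) u x HLm Hord) as [y0 [Hy0 Hle]].
    eapply Rle_trans; [|exact Hle].
    apply (lipschitz_up_to_closed_cell G E _ (odval lo) (Some (dval t)) u); auto.
Qed.

End PieceGroups.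

Lemma piece_group_slopes Lm lo hi u v : 0 <= dval Lm ->
  In v (group_lines (piece_group Lm lo hi u)) -> Rabs (dval (fst v)) <= dval Lm.
Proof.
  intros HL Hv. unfold piece_group in Hv.
  destruct (Rle_dec (Rabs (dval (fst u))) (dval Lm)).
  - destruct Hv as [<-|Hv]; auto.
    apply in_app_or in Hv. destruct Hv as [Hv|Hv].
    + destruct hi; simpl in Hv; [|tauto]. destruct Hv as [<-|[]]. simpl.
      rewrite Rabs_right; lra.
    + destruct lo; simpl in Hv; [|tauto]. destruct Hv as [<-|[]]. simpl.
      rewrite dval_opp, Rabs_Ropp, Rabs_right; lra.
  - destruct (Rlt_dec 0 (dval (fst u))); unfold cone, group_lines in Hv; simpl in Hv;
      (destruct Hv as [<-|[<-|[]]]; simpl;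
       [rewrite Rabs_right; lra|rewrite dval_opp, Rabs_Ropp, Rabs_right; lra]).
Qed.

Lemma piece_group_length Lm lo hi u : (length (group_lines (piece_group Lm lo hi u)) <= 3)%nat.
Proof.
  unfold piece_group. destruct (Rle_dec _ _); [|destruct (Rlt_dec _ _); simpl; lia].
  unfold group_lines; simpl. destruct hi, lo; simpl; lia.
Qed.

Lemma in_piece_groups Lm ts : forall lo ps g, In g (piece_groups Lm lo ts ps) ->
  exists lo' hi' u, g = piece_group Lm lo' hi' u /\ In u ps /\
    (forall t, lo' = Some t -> lo' = lo \/ In t ts) /\ (forall t, hi' = Some t -> In t ts).
Proof.
  induction ts as [|t ts IH]; intros lo ps g Hg; destruct ps as [|u ps]; simpl in Hg; try tauto.
  - destruct Hg as [<-|[]]. exists lo, None, u. simpl. repeat split; auto; discriminate.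
  - destruct Hg as [<-|Hg].
    + exists lo, (Some t), u. simpl. repeat split; auto. intros t' [= ->]; auto.
    + destruct (IH _ _ _ Hg) as [lo' [hi' [u' [-> [Hu [Hlo Hhi]]]]]].
      exists lo', hi', u'. simpl. repeat split; auto.
      * intros t' Ht'. destruct (Hlo t' Ht') as [E|E]; auto. right; left. congruence.
Qed.

Lemma piece_groups_length Lm ts : forall lo ps, length ps = S (length ts) ->
  length (piece_groups Lm lo ts ps) = length ps.
Proof.
  induction ts as [|t ts IH]; intros lo ps H; destruct ps as [|u ps]; simpl in *; try lia.
  f_equal. apply IH. lia.
Qed.

Lemma piece_group_bounded Lm B lo hi u :
  dy_bounded B Lm -> line_bounded B u ->
  (forall t, lo = Some t -> dy_bounded B t) -> (forall t, hi = Some t -> dy_bounded B t) ->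
  forall v, In v (group_lines (piece_group Lm lo hi u)) -> line_bounded (16 * B + 5) v.
Proof.
  intros HL Hu Hlo Hhi.
  assert (Hthr : forall a t, dy_bounded B a -> dy_bounded B t ->
            line_bounded (16 * B + 5) (line_through a t (line_at u t))).
  { intros a t Ha Ht. replace (16 * B + 5)%nat with (4 * (4 * B + 1) + 1)%nat by lia.
    apply line_through_bounded; [apply (dy_bounded_mono B)|apply (dy_bounded_mono B)|];
      auto; try lia. apply line_at_bounded; auto. }
  assert (Hanchor : forall o1 o2, (forall t, o1 = Some t -> dy_bounded B t) ->
            (forall t, o2 = Some t -> dy_bounded B t) -> dy_bounded B (anchor o1 o2)).
  { intros [t1|] [t2|] H1 H2; simpl; auto. split; simpl; [pose proof (Zpow2_pos B)|]; lia. }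
  intros v Hv. unfold piece_group in Hv.
  destruct (Rle_dec (Rabs (dval (fst u))) (dval Lm)).
  - destruct Hv as [<-|Hv]; [destruct Hu; split; (eapply dy_bounded_mono; [|eassumption]; lia)|].
    apply in_app_or in Hv. destruct Hv as [Hv|Hv].
    + destruct hi as [h|]; simpl in Hv; [|tauto]. destruct Hv as [<-|[]]. auto.
    + destruct lo as [l|]; simpl in Hv; [|tauto]. destruct Hv as [<-|[]].
      apply Hthr; auto. apply dy_bounded_opp; auto.
  - destruct (Rlt_dec 0 (dval (fst u))); unfold cone, group_lines in Hv; simpl in Hv;
      (destruct Hv as [<-|[<-|[]]]; apply Hthr; auto; apply dy_bounded_opp; auto).
Qed.

Lemma length_flat_map_le {A B} (f : A -> list B) l k :
  (forall x, In x l -> (length (f x) <= k)%nat) -> (length (flat_map f l) <= length l * k)%nat.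
Proof.
  induction l as [|x l IH]; simpl; intros H; [lia|]. rewrite length_app.
  pose proof (H x (or_introl eq_refl)).
  assert (length (flat_map f l) <= length l * k)%nat by (apply IH; auto). lia.
Qed.

Theorem lipschitz_envelope (G E : R -> R) (Lm : dy) (r : plrep) (B : nat) :
  0 <= dval Lm -> lipschitz_up_to G E (dval Lm) -> (forall x, 0 <= E x) ->
  pl_wf r -> (forall x, G x = pl_eval r x) ->
  dy_bounded B Lm -> Forall (dy_bounded B) (thr r) -> Forall (line_bounded B) (pcs r) ->
  exists gl, gl <> [] /\ (length (all_lines gl) <= 3 * length (pcs r))%nat /\
    (forall v, In v (all_lines gl) ->
       Rabs (dval (fst v)) <= dval Lm /\ line_bounded (16 * B + 5) v) /\
    (forall x, G x - E x <= min_max gl x <= G x).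
Proof.
  intros HL HG HE [W1 [W2 _]] Hr HB Hts Hps.
  set (gl := piece_groups Lm None (thr r) (pcs r)).
  assert (HI : pl_agrees_from G None (thr r) (pcs r)).
  { split; [|split; [auto|split; [discriminate|auto]]]. intros y _. rewrite Hr. reflexivity. }
  assert (Hlen : length gl = length (pcs r)) by (apply piece_groups_length; auto).
  assert (Hgl : forall g, In g gl -> exists lo hi u, g = piece_group Lm lo hi u /\
             In u (pcs r) /\ (forall t, lo = Some t -> In t (thr r)) /\
             (forall t, hi = Some t -> In t (thr r))).
  { intros g Hg. destruct (in_piece_groups _ _ _ _ _ Hg) as [lo [hi [u [-> [Hu [Hlo Hhi]]]]]].
    exists lo, hi, u. repeat split; auto.
    intros t Ht. destruct (Hlo t Ht) as [E'|E']; [congruence|auto]. }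
  exists gl. split; [|split; [|split]].
  - intros E0. rewrite E0 in Hlen. rewrite W1 in Hlen. discriminate.
  - unfold all_lines. rewrite <- Hlen, Nat.mul_comm. apply length_flat_map_le.
    intros g Hg. destruct (Hgl g Hg) as [lo [hi [u [-> _]]]]. apply piece_group_length.
  - intros v Hv. apply in_flat_map in Hv. destruct Hv as [g [Hg Hv]].
    destruct (Hgl g Hg) as [lo [hi [u [-> [Hu [Hlo Hhi]]]]]].
    rewrite Forall_forall in Hts, Hps.
    split; [eapply piece_group_slopes; eauto|].
    apply (piece_group_bounded Lm B lo hi u); auto; intros t Ht; apply Hts; auto.
  - intros x. split.
    + assert (Hne : gl <> []) by (intros E0; rewrite E0 in Hlen; rewrite W1 in Hlen; discriminate).
      destruct (min_max_attained gl x Hne) as [g [Hg ->]].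
      eapply piece_groups_max_ge; eauto.
    + destruct (piece_groups_max_le G E Lm HL HG HE (thr r) None (pcs r) HI x I)
        as [g [Hg Hle]].
      eapply Rle_trans; [apply min_max_le; eauto|auto].
Qed.

(** * Rounding the envelope on a dyadic grid *)

Definition grid_floor_num (m : nat) (x : R) : Z := (up (x * 2 ^ m) - 1)%Z.
Definition grid_floor (m : nat) (x : R) : R := IZR (grid_floor_num m x) / 2 ^ m.
Definition on_grid (m : nat) (y : R) : Prop := exists k, y = IZR k / 2 ^ m.

Lemma grid_floor_spec m x : grid_floor m x <= x < grid_floor m x + / 2 ^ m.
Proof.
  unfold grid_floor, grid_floor_num. pose proof (pow2_pos m).
  destruct (archimed (x * 2 ^ m)) as [A B]. rewrite minus_IZR. split.
  - apply Rmult_le_reg_r with (2 ^ m); auto.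
    unfold Rdiv. rewrite Rmult_assoc, Rinv_l by lra. lra.
  - apply Rmult_lt_reg_r with (2 ^ m); auto.
    unfold Rdiv. rewrite Rmult_plus_distr_r, Rmult_assoc, Rinv_l by lra. lra.
Qed.

Lemma on_grid_floor m x : on_grid m (grid_floor m x).
Proof. exists (grid_floor_num m x). reflexivity. Qed.

Lemma on_grid_floor_succ m x : on_grid m (grid_floor m x + / 2 ^ m).
Proof.
  exists (grid_floor_num m x + 1)%Z. unfold grid_floor. rewrite plus_IZR.
  pose proof (pow2_pos m). field. lra.
Qed.

Lemma grid_floor_eq m x y : on_grid m y -> y <= x < y + / 2 ^ m -> grid_floor m x = y.
Proof.
  intros [k ->] [H1 H2]. pose proof (pow2_pos m).
  unfold grid_floor, grid_floor_num. assert (Hu : up (x * 2 ^ m) = (k + 1)%Z).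
  { symmetry. apply tech_up; rewrite plus_IZR.
    - apply Rmult_lt_compat_r with (r := 2 ^ m) in H2; auto.
      replace ((IZR k / 2 ^ m + / 2 ^ m) * 2 ^ m) with (IZR k + 1) in H2 by (field; lra). lra.
    - apply Rmult_le_compat_r with (r := 2 ^ m) in H1; [|lra].
      replace (IZR k / 2 ^ m * 2 ^ m) with (IZR k) in H1 by (field; lra). lra. }
  rewrite Hu. f_equal. f_equal. lia.
Qed.

Lemma on_grid_gap m a b : on_grid m a -> on_grid m b -> a < b -> a + / 2 ^ m <= b.
Proof.
  intros [k ->] [j ->] H. pose proof (pow2_pos m).
  assert (IZR k < IZR j).
  { apply Rmult_lt_compat_r with (r := 2 ^ m) in H; auto.
    unfold Rdiv in H. rewrite !Rmult_assoc, Rinv_l, !Rmult_1_r in H by lra. auto. }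
  apply lt_IZR in H1. assert (IZR k + 1 <= IZR j) by (rewrite <- plus_IZR; apply IZR_le; lia).
  replace (IZR k / 2 ^ m + / 2 ^ m) with ((IZR k + 1) / 2 ^ m) by (field; lra).
  unfold Rdiv. apply Rmult_le_compat_r; auto. left; apply Rinv_0_lt_compat; auto.
Qed.

Lemma grid_floor_le m x y : x <= y -> grid_floor m x <= grid_floor m y.
Proof.
  intros H. apply Rnot_lt_le. intros H1.
  pose proof (on_grid_gap m _ _ (on_grid_floor m y) (on_grid_floor m x) H1).
  pose proof (grid_floor_spec m x). pose proof (grid_floor_spec m y). lra.
Qed.

Lemma grid_floor_id m p : on_grid m p -> grid_floor m p = p.
Proof.
  intros H. apply grid_floor_eq; auto. pose proof (Rinv_0_lt_compat _ (pow2_pos m)). lra.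
Qed.

Fixpoint insert_dedup (d : dy) (l : list dy) : list dy :=
  match l with
  | [] => [d]
  | e :: l' =>
      match total_order_T (dval d) (dval e) with
      | inleft (left _) => d :: l
      | inleft (right _) => l
      | inright _ => e :: insert_dedup d l'
      end
  end.

Fixpoint sort_dedup (l : list dy) : list dy :=
  match l with [] => [] | d :: l' => insert_dedup d (sort_dedup l') end.

Lemma in_insert_dedup d l e : In e (insert_dedup d l) -> In e (d :: l).
Proof.
  induction l as [|x l IH]; simpl; [tauto|].
  destruct (total_order_T (dval d) (dval x)) as [[H|H]|H]; simpl; try tauto.
  intros [H1|H1]; [tauto|]. apply IH in H1. simpl in H1. tauto.
Qed.

Lemma in_map_insert_dedup d l r : In r (map dval (d :: l)) -> In r (map dval (insert_dedup d l)).
Proof.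
  induction l as [|x l IH]; simpl; [tauto|].
  destruct (total_order_T (dval d) (dval x)) as [[H|H]|H]; simpl.
  - tauto.
  - intros [H1|[H1|H1]]; [left; congruence|tauto|tauto].
  - intros [H1|[H1|H1]]; [right; apply IH; simpl; tauto|tauto|right; apply IH; simpl; tauto].
Qed.

Lemma insert_dedup_increasing d l : strictly_increasing (map dval l) ->
  strictly_increasing (map dval (insert_dedup d l)).
Proof.
  induction l as [|x l IH]; [simpl; auto|].
  intros Hs. cbn [map] in Hs. apply strictly_increasing_cons in Hs. destruct Hs as [Hs1 Hs2].
  cbn [insert_dedup]. destruct (total_order_T (dval d) (dval x)) as [[H|H]|H]; cbn [map].
  - apply strictly_increasing_cons. split; [|apply strictly_increasing_cons; auto].
    intros y [<-|Hy]; auto. specialize (Hs1 y Hy). lra.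
  - apply strictly_increasing_cons; auto.
  - apply strictly_increasing_cons. split; auto. intros y Hy. apply in_map_iff in Hy.
    destruct Hy as [e [<- He]]. apply in_insert_dedup in He.
    destruct He as [<-|He]; auto. apply Hs1. apply in_map; auto.
Qed.

Lemma sort_dedup_increasing l : strictly_increasing (map dval (sort_dedup l)).
Proof. induction l; simpl; auto. apply insert_dedup_increasing; auto. Qed.

Lemma in_sort_dedup l e : In e (sort_dedup l) -> In e l.
Proof. induction l; simpl; auto. intros H. apply in_insert_dedup in H. firstorder. Qed.

Lemma in_map_sort_dedup l r : In r (map dval l) -> In r (map dval (sort_dedup l)).
Proof.
  induction l as [|d l IH]; simpl; [tauto|]. intros H. apply in_map_insert_dedup. simpl. tauto.
Qed.

Lemma sort_dedup_length l : (length (sort_dedup l) <= length l)%nat.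
Proof.
  assert (Hi : forall d l, (length (insert_dedup d l) <= S (length l))%nat).
  { intros d l0. induction l0 as [|x l0 IH]; simpl; [lia|].
    destruct (total_order_T (dval d) (dval x)) as [[H|H]|H]; simpl; lia. }
  induction l; simpl; auto. specialize (Hi a (sort_dedup l)). lia.
Qed.

Lemma lipschitz_nonneg Lam H : lipschitz Lam H -> 0 <= Lam.
Proof.
  intros HL. specialize (HL 1 0). rewrite Rminus_0_r, Rabs_R1 in HL.
  pose proof (Rabs_pos (H 1 - H 0)). lra.
Qed.

Section GridRounding.
Variables (H : R -> R) (Lam : R) (m : nat) (Q : list R).
Hypothesis HL : lipschitz Lam H.

Definition grid_chord (q x : R) : R := H q + (x - q) * ((H (q + / 2 ^ m) - H q) * 2 ^ m).

Definition grid_rounding (x : R) : R :=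
  if in_dec Req_dec_T (grid_floor m x) Q then grid_chord (grid_floor m x) x else H x.

Lemma grid_rounding_on_grid p : on_grid m p -> grid_rounding p = H p.
Proof.
  intros Hp. unfold grid_rounding. rewrite grid_floor_id by auto.
  destruct (in_dec _ _ _); auto. unfold grid_chord. ring.
Qed.

Lemma grid_chord_slope q : Rabs ((H (q + / 2 ^ m) - H q) * 2 ^ m) <= Lam.
Proof.
  pose proof (pow2_pos m). specialize (HL (q + / 2 ^ m) q).
  replace (q + / 2 ^ m - q) with (/ 2 ^ m) in HL by ring.
  rewrite (Rabs_right (/ 2 ^ m)) in HL by (left; apply Rinv_0_lt_compat; auto).
  rewrite Rabs_mult, (Rabs_right (2 ^ m)) by lra.
  apply Rmult_le_compat_r with (r := 2 ^ m) in HL; [|lra].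
  replace (Lam * / 2 ^ m * 2 ^ m) with Lam in HL by (field; lra). auto.
Qed.

Lemma grid_chord_lipschitz q x y : Rabs (grid_chord q x - grid_chord q y) <= Lam * Rabs (x - y).
Proof.
  unfold grid_chord. pose proof (grid_chord_slope q).
  set (s := (H (q + / 2 ^ m) - H q) * 2 ^ m) in *.
  replace (H q + (x - q) * s - (H q + (y - q) * s)) with ((x - y) * s) by ring.
  rewrite Rabs_mult, Rmult_comm. apply Rmult_le_compat_r; auto. apply Rabs_pos.
Qed.

Lemma grid_chord_at_ends q : grid_chord q q = H q /\ grid_chord q (q + / 2 ^ m) = H (q + / 2 ^ m).
Proof. unfold grid_chord. pose proof (pow2_pos m). split; [ring|field; lra]. Qed.

Lemma grid_rounding_close x : Rabs (grid_rounding x - H x) <= 2 * Lam / 2 ^ m.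
Proof.
  pose proof (pow2_pos m). pose proof (lipschitz_nonneg _ _ HL).
  unfold grid_rounding. destruct (in_dec _ _ _).
  - set (q := grid_floor m x). assert (Hq : q <= x < q + / 2 ^ m) by apply grid_floor_spec.
    destruct (grid_chord_at_ends q) as [E _].
    replace (grid_chord q x - H x) with ((grid_chord q x - grid_chord q q) + (H q - H x))
      by (rewrite E; ring).
    eapply Rle_trans; [apply Rabs_triang|].
    pose proof (grid_chord_lipschitz q x q) as C1. pose proof (HL q x) as C2.
    rewrite (Rabs_minus_sym q x), (Rabs_right (x - q)) in C2 by lra.
    rewrite (Rabs_right (x - q)) in C1 by lra.
    assert (Lam * (x - q) <= Lam * / 2 ^ m) by (apply Rmult_le_compat_l; lra).
    unfold Rdiv. lra.
  - rewrite Rminus_diag, Rabs_R0. apply Rmult_le_pos; [lra|]. left; apply Rinv_0_lt_compat; auto.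
Qed.

Definition right_anchor (x : R) : R :=
  if in_dec Req_dec_T (grid_floor m x) Q then grid_floor m x + / 2 ^ m else x.
Definition left_anchor (x : R) : R :=
  if in_dec Req_dec_T (grid_floor m x) Q then grid_floor m x else x.

Lemma right_anchor_spec x : x <= right_anchor x /\
  grid_rounding (right_anchor x) = H (right_anchor x) /\
  Rabs (grid_rounding x - grid_rounding (right_anchor x)) <= Lam * (right_anchor x - x).
Proof.
  pose proof (grid_floor_spec m x). unfold right_anchor.
  destruct (in_dec _ _ _) as [Hi|Hi].
  - rewrite grid_rounding_on_grid by apply on_grid_floor_succ. split; [lra|split; auto].
    unfold grid_rounding at 1. destruct (in_dec _ _ _); [|tauto].
    destruct (grid_chord_at_ends (grid_floor m x)) as [_ <-].
    eapply Rle_trans; [apply grid_chord_lipschitz|]. rewrite Rabs_left1 by lra. lra.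
  - split; [lra|split]; [unfold grid_rounding; destruct (in_dec _ _ _); tauto|].
    rewrite !Rminus_diag, Rabs_R0. lra.
Qed.

Lemma left_anchor_spec x : left_anchor x <= x /\
  grid_rounding (left_anchor x) = H (left_anchor x) /\
  Rabs (grid_rounding x - grid_rounding (left_anchor x)) <= Lam * (x - left_anchor x).
Proof.
  pose proof (grid_floor_spec m x). unfold left_anchor.
  destruct (in_dec _ _ _) as [Hi|Hi].
  - rewrite grid_rounding_on_grid by apply on_grid_floor. split; [lra|split; auto].
    unfold grid_rounding at 1. destruct (in_dec _ _ _); [|tauto].
    destruct (grid_chord_at_ends (grid_floor m x)) as [<- _].
    eapply Rle_trans; [apply grid_chord_lipschitz|]. rewrite Rabs_right by lra. lra.
  - split; [lra|split]; [unfold grid_rounding; destruct (in_dec _ _ _); tauto|].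
    rewrite !Rminus_diag, Rabs_R0. lra.
Qed.

Lemma right_anchor_le_left_anchor x y : x <= y ->
  ~ (In (grid_floor m x) Q /\ grid_floor m x = grid_floor m y) -> right_anchor x <= left_anchor y.
Proof.
  intros Hxy Hn. pose proof (grid_floor_spec m x). pose proof (grid_floor_spec m y).
  pose proof (grid_floor_le m x y Hxy).
  assert (Hgap : grid_floor m x < grid_floor m y ->
                 grid_floor m x + / 2 ^ m <= grid_floor m y)
    by (apply on_grid_gap; apply on_grid_floor).
  unfold right_anchor, left_anchor.
  destruct (in_dec Req_dec_T (grid_floor m x) Q) as [Hx|Hx];
    destruct (in_dec Req_dec_T (grid_floor m y) Q) as [Hy|Hy]; try lra.
  - destruct (Req_dec (grid_floor m x) (grid_floor m y)); [tauto|lra].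
  - destruct (Req_dec (grid_floor m x) (grid_floor m y)); [tauto|lra].
  - destruct (Req_dec (grid_floor m x) (grid_floor m y)) as [E|E];
      [rewrite <- E in Hy; tauto|lra].
Qed.

Lemma grid_rounding_lipschitz : lipschitz Lam grid_rounding.
Proof.
  assert (Hmain : forall x y, x <= y ->
            Rabs (grid_rounding x - grid_rounding y) <= Lam * (y - x)).
  { intros x y Hxy.
    destruct (classic (In (grid_floor m x) Q /\ grid_floor m x = grid_floor m y))
      as [[Hq E]|Hn].
    - unfold grid_rounding. rewrite <- E.
      destruct (in_dec _ _ _); [|tauto].
      eapply Rle_trans; [apply grid_chord_lipschitz|]. rewrite Rabs_left1 by lra. lra.
    - pose proof (right_anchor_le_left_anchor x y Hxy Hn).
      destruct (right_anchor_spec x) as [R1 [R2 R3]].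
      destruct (left_anchor_spec y) as [L1 [L2 L3]].
      pose proof (HL (right_anchor x) (left_anchor y)) as Hmid.
      rewrite <- R2, <- L2, (Rabs_left1 (right_anchor x - left_anchor y)) in Hmid by lra.
      rewrite Rabs_minus_sym in L3.
      replace (grid_rounding x - grid_rounding y) with
        ((grid_rounding x - grid_rounding (right_anchor x))
         + (grid_rounding (right_anchor x) - grid_rounding (left_anchor y))
         + (grid_rounding (left_anchor y) - grid_rounding y)) by ring.
      eapply Rle_trans; [apply Rabs_triang|].
      eapply Rle_trans; [apply Rplus_le_compat; [apply Rabs_triang|apply Rle_refl]|].
      lra. }
  intros x y. destruct (Rle_dec x y).
  - rewrite (Rabs_left1 (x - y)) by lra. replace (- (x - y)) with (y - x) by ring. auto.
  - rewrite Rabs_minus_sym, (Rabs_right (x - y)) by lra. apply Hmain. lra.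
Qed.

End GridRounding.

Definition crossing_cells (m : nat) (gl : list group) : list R :=
  map (grid_floor m) (crossings gl).

Definition breakpoints (m : nat) (gl : list group) : list dy :=
  sort_dedup (flat_map (fun z => [Dy (grid_floor_num m z) m; Dy (grid_floor_num m z + 1) m])
                       (crossings gl)).

Definition rounded_envelope (gl : list group) (m : nat) : R -> R :=
  grid_rounding (min_max gl) m (crossing_cells m gl).

Lemma in_breakpoints m gl r : In r (map dval (breakpoints m gl)) <->
  exists z, In z (crossings gl) /\ (r = grid_floor m z \/ r = grid_floor m z + / 2 ^ m).
Proof.
  assert (Hs : forall z, dval (Dy (grid_floor_num m z + 1) m) = grid_floor m z + / 2 ^ m).
  { intros z. unfold dval, grid_floor; simpl. rewrite plus_IZR. pose proof (pow2_pos m).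
    field. lra. }
  split.
  - intros H. apply in_map_iff in H. destruct H as [d [<- Hd]]. apply in_sort_dedup in Hd.
    apply in_flat_map in Hd. destruct Hd as [z [Hz Hd]].
    exists z. split; auto. destruct Hd as [<-|[<-|[]]]; [left; reflexivity|right; apply Hs].
  - intros [z [Hz Hr]]. apply in_map_sort_dedup, in_map_iff.
    destruct Hr as [-> | ->]; [exists (Dy (grid_floor_num m z) m)|exists (Dy (grid_floor_num m z + 1) m)];
      (split; [auto|apply in_flat_map; exists z; simpl; auto]).
Qed.

Lemma on_grid_breakpoint m gl r : In r (map dval (breakpoints m gl)) -> on_grid m r.
Proof.
  intros H. apply in_breakpoints in H.
  destruct H as [z [_ [->| ->]]]; [apply on_grid_floor|apply on_grid_floor_succ].
Qed.

Lemma crossing_cell_ends m gl q : In q (crossing_cells m gl) ->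
  In q (map dval (breakpoints m gl)) /\ In (q + / 2 ^ m) (map dval (breakpoints m gl)).
Proof.
  intros H. apply in_map_iff in H. destruct H as [z [<- Hz]].
  split; apply in_breakpoints; exists z; auto.
Qed.

(* [lo] and [hi] are consecutive points of [S], [None] standing for the ends beyond its extremes. *)
Definition adjacent_in (S : list R) (lo hi : option R) : Prop :=
  (forall a, lo = Some a -> In a S) /\ (forall b, hi = Some b -> In b S) /\
  (forall y, In y S -> ~ (strictly_above lo y /\ below hi y)) /\ ordered_bounds lo hi.

Lemma affine_on_cells_adjacent L P (S : list R) :
  (forall lo hi, adjacent_in S lo hi -> affine_on L P lo hi) ->
  forall T lo, (forall a, lo = Some a -> In a S) -> strictly_increasing (map dval T) ->
  (forall d, In d T -> In (dval d) S /\ strictly_above lo (dval d)) ->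
  (forall y, In y S -> strictly_above lo y -> In y (map dval T)) ->
  affine_on_cells L P lo T.
Proof.
  intros HA T. induction T as [|s T IH]; intros lo Hlo HSI HT1 HT2; simpl.
  - apply HA. split; [auto|split; [discriminate|split]].
    + intros y Hy [Hy1 _]. apply (HT2 y Hy Hy1).
    + destruct lo; exact I.
  - simpl in HSI. apply strictly_increasing_cons in HSI. destruct HSI as [HS1 HS2].
    destruct (HT1 s (or_introl eq_refl)) as [Hs1 Hs2].
    split.
    + apply HA. split; [auto|split; [intros b [= <-]; auto|split]].
      * intros y Hy [Hy1 Hy2]. simpl in Hy2. destruct (HT2 y Hy Hy1) as [E|E]; [lra|].
        specialize (HS1 y E). lra.
      * destruct lo; simpl in *; auto.
    + apply IH; auto.
      * intros a [= <-]; auto.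
      * intros d Hd. split; [apply HT1; right; auto|]. simpl. apply HS1. apply in_map; auto.
      * intros y Hy Hy1. simpl in Hy1.
        assert (strictly_above lo y) by (destruct lo; simpl in *; auto; lra).
        destruct (HT2 y Hy H) as [E|E]; auto. lra.
Qed.

Section RoundedEnvelopeCells.
Variables (m : nat) (gl : list group).
Let S := map dval (breakpoints m gl).

Lemma crossing_cell_lower_end lo hi q x : adjacent_in S lo hi -> In q (crossing_cells m gl) ->
  in_cell lo hi x -> q <= x < q + / 2 ^ m -> lo = Some q.
Proof.
  intros [G1 [_ [G3 _]]] Hq [Hx1 Hx2] Hx3.
  destruct (crossing_cell_ends m gl q Hq) as [Sq _].
  assert (Hnot : ~ (strictly_above lo q /\ below hi q)) by auto.
  destruct lo as [a|].
  - simpl in *. assert (a < q -> False) by (intros; apply Hnot; destruct hi; simpl in *; lra).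
    assert (q < a -> False).
    { intros Hqa. pose proof (on_grid_gap m q a (on_grid_breakpoint m gl q Sq)
        (on_grid_breakpoint m gl a (G1 a eq_refl)) Hqa). lra. }
    f_equal. lra.
  - exfalso. apply Hnot. split; [exact I|]. destruct hi as [b|]; simpl in *; auto; lra.
Qed.

Lemma crossing_cell_upper_end a hi : adjacent_in S (Some a) hi -> In a (crossing_cells m gl) ->
  hi = Some (a + / 2 ^ m).
Proof.
  intros [_ [G2 [G3 G4]]] Hq.
  destruct (crossing_cell_ends m gl a Hq) as [Sa Sa'].
  pose proof (Rinv_0_lt_compat _ (pow2_pos m)).
  assert (Hnot : ~ (strictly_above (Some a) (a + / 2 ^ m) /\ below hi (a + / 2 ^ m))) by auto.
  destruct hi as [b|]; simpl in *.
  - pose proof (on_grid_gap m a b (on_grid_breakpoint m gl a Sa)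
      (on_grid_breakpoint m gl b (G2 b eq_refl)) G4).
    f_equal. apply Rle_antisym; [apply Rnot_lt_le; intro; apply Hnot; split|]; lra.
  - exfalso. apply Hnot. split; [lra|exact I].
Qed.

Variable B : nat.
Hypotheses (Hne : gl <> []) (HB : (m <= B)%nat)
  (Hlines : forall v, In v (all_lines gl) -> line_bounded B v)
  (Hbps : forall d, In d (breakpoints m gl) -> dy_bounded B d).

Lemma rounded_envelope_affine_crossing_cell a hi :
  adjacent_in S (Some a) hi -> In a (crossing_cells m gl) ->
  affine_on (rounded_envelope gl m) (line_bounded (64 * B + 25)) (Some a) hi.
Proof.
  intros Hadj Ha. rewrite (crossing_cell_upper_end a hi Hadj Ha).
  destruct (crossing_cell_ends m gl a Ha) as [Sa Sb].
  apply in_map_iff in Sa. destruct Sa as [da [Eda Hda]].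
  apply in_map_iff in Sb. destruct Sb as [db [Edb Hdb]].
  destruct (min_max_attained_line gl a Hne) as [w [Hw Ew]].
  destruct (min_max_attained_line gl (a + / 2 ^ m) Hne) as [w' [Hw' Ew']].
  set (va := line_at w da). set (vb := line_at w' db).
  set (sg := dmul (dsub vb va) (dpow2 m)).
  exists (line_through sg da va). split.
  - assert (Hva : dy_bounded (4 * B + 1) va) by (apply line_at_bounded; auto).
    assert (Hvb : dy_bounded (4 * B + 1) vb) by (apply line_at_bounded; auto).
    assert (Hsg : dy_bounded (16 * B + 6) sg).
    { replace (16 * B + 6)%nat with (2 * (2 * (4 * B + 1) + 1))%nat by lia.
      apply dy_bounded_mul; [apply dy_bounded_sub; auto|apply dy_bounded_pow2; lia]. }
    replace (64 * B + 25)%nat with (4 * (16 * B + 6) + 1)%nat by lia.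
    apply line_through_bounded; auto;
      [apply (dy_bounded_mono B)|apply (dy_bounded_mono (4 * B + 1))]; auto; lia.
  - intros x Hx1 Hx2. simpl in Hx1, Hx2.
    assert (Hga : on_grid m a) by (apply (on_grid_breakpoint m gl), crossing_cell_ends; auto).
    unfold rounded_envelope, grid_rounding.
    rewrite (grid_floor_eq m x a Hga) by lra.
    destruct (in_dec _ _ _); [|tauto].
    unfold grid_chord, sg, va, vb.
    rewrite eval_line_through, dval_mul, dval_sub, dval_pow2, !dval_line_at, Eda, Edb, <- Ew, <- Ew'.
    ring.
Qed.

Lemma rounded_envelope_affine_plain_cell lo hi :
  adjacent_in S lo hi -> ~ (exists a, lo = Some a /\ In a (crossing_cells m gl)) ->
  affine_on (rounded_envelope gl m) (line_bounded B) lo hi.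
Proof.
  intros Hadj Hno.
  assert (HN : no_crossing_in gl lo hi).
  { intros z Hz [Hz1 Hz2]. pose proof (grid_floor_spec m z).
    assert (Hq : In (grid_floor m z) (crossing_cells m gl)) by (apply in_map; auto).
    assert (in_cell lo hi z) by (split; auto; destruct lo; simpl in *; auto; lra).
    apply Hno. exists (grid_floor m z). split; auto.
    eapply crossing_cell_lower_end; eauto. }
  destruct (min_max_affine_in_cell gl lo hi Hne HN) as [u [Hu Eu]].
  exists u. split; auto.
  intros x Hx1 Hx2. rewrite <- Eu by (split; auto).
  unfold rounded_envelope, grid_rounding. destruct (in_dec _ _ _) as [Hi|Hi]; auto.
  exfalso. apply Hno. exists (grid_floor m x). split; auto.
  apply (crossing_cell_lower_end lo hi _ x Hadj Hi); [split; auto|apply grid_floor_spec].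
Qed.

Lemma rounded_envelope_affine_on_cells :
  affine_on_cells (rounded_envelope gl m) (line_bounded (64 * B + 25)) None (breakpoints m gl).
Proof.
  apply (affine_on_cells_adjacent _ _ S); try discriminate.
  - intros lo hi Hadj.
    destruct (classic (exists a, lo = Some a /\ In a (crossing_cells m gl))) as [[a [-> Ha]]|Hno].
    + apply rounded_envelope_affine_crossing_cell; auto.
    + destruct (rounded_envelope_affine_plain_cell lo hi Hadj Hno) as [u [[Hu1 Hu2] Eu]].
      exists u. split; auto. split; apply (dy_bounded_mono B); auto; lia.
  - apply sort_dedup_increasing.
  - intros d Hd. split; [apply in_map; auto|exact I].
  - intros y Hy _. exact Hy.
Qed.

End RoundedEnvelopeCells.

Lemma length_breakpoints m gl :
  (length (breakpoints m gl) <= 2 * length (all_lines gl) * length (all_lines gl))%nat.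
Proof.
  eapply Nat.le_trans; [apply sort_dedup_length|].
  eapply Nat.le_trans; [apply (length_flat_map_le _ _ 2); intros; simpl; lia|].
  assert (length (crossings gl) <= length (all_lines gl) * length (all_lines gl))%nat.
  { apply length_flat_map_le. intros v _. eapply Nat.le_trans;
      [apply (length_flat_map_le _ _ 1)|lia].
    intros w _. unfold crossing. destruct (Req_dec_T _ _); simpl; lia. }
  lia.
Qed.

Lemma Rabs_crossing_bounded gl B z : (forall v, In v (all_lines gl) -> line_bounded B v) ->
  In z (crossings gl) -> Rabs z <= 2 ^ (3 * B + 1).
Proof.
  intros Hp Hz. apply in_flat_map in Hz. destruct Hz as [v [Hv Hz]].
  apply in_flat_map in Hz. destruct Hz as [w [Hw Hz]]. unfold crossing in Hz.
  destruct (Req_dec_T _ _) as [E|E]; [destruct Hz|]. destruct Hz as [<-|[]].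
  destruct (Hp v Hv) as [Av Bv], (Hp w Hw) as [Aw Bw].
  pose proof (dy_bounded_separated B _ _ Av Aw E) as Hsep.
  pose proof (Rabs_dval_bounded _ _ Bv). pose proof (Rabs_dval_bounded _ _ Bw).
  pose proof (pow2_pos (2 * B)).
  assert (Hd : 0 < Rabs (dval (fst v) - dval (fst w)))
    by (eapply Rlt_le_trans; [apply Rinv_0_lt_compat; eauto|auto]).
  unfold Rdiv. rewrite Rabs_mult, Rabs_inv.
  assert (Hn : Rabs (dval (snd w) - dval (snd v)) <= 2 * 2 ^ B).
  { unfold Rminus. eapply Rle_trans; [apply Rabs_triang|]. rewrite Rabs_Ropp. lra. }
  assert (Hi : / Rabs (dval (fst v) - dval (fst w)) <= 2 ^ (2 * B)).
  { rewrite <- (Rinv_inv (2 ^ (2 * B))).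
    apply Rinv_le_contravar; [apply Rinv_0_lt_compat|]; auto. }
  replace (3 * B + 1)%nat with (S (B + 2 * B)) by lia. rewrite <- tech_pow_Rmult, pow_add.
  rewrite <- Rmult_assoc.
  apply Rmult_le_compat; auto; [apply Rabs_pos|left; apply Rinv_0_lt_compat; auto].
Qed.

Lemma dy_bounded_of_Rabs (n : Z) (e B : nat) : (e <= B)%nat -> Rabs (IZR n) <= 2 ^ B ->
  dy_bounded B (Dy n e).
Proof.
  intros He H. split; [|auto]. apply le_IZR. rewrite abs_IZR, IZR_pow2. auto.
Qed.

Lemma breakpoints_bounded m gl B : (forall v, In v (all_lines gl) -> line_bounded B v) ->
  forall d, In d (breakpoints m gl) -> dy_bounded (3 * B + m + 2) d.
Proof.
  intros Hp d Hd. apply in_sort_dedup, in_flat_map in Hd.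
  destruct Hd as [z [Hz Hd]]. pose proof (Rabs_crossing_bounded gl B z Hp Hz) as Hzb.
  pose proof (pow2_pos m).
  assert (Hy : Rabs (z * 2 ^ m) + 1 <= 2 ^ (3 * B + m + 2)).
  { rewrite Rabs_mult, (Rabs_right (2 ^ m)) by lra.
    assert (Rabs z * 2 ^ m <= 2 ^ (3 * B + 1) * 2 ^ m) by (apply Rmult_le_compat_r; lra).
    rewrite <- pow_add in H0.
    replace (3 * B + m + 2)%nat with (S (3 * B + 1 + m)) by lia. rewrite <- tech_pow_Rmult.
    assert (1 <= 2 ^ (3 * B + 1 + m)) by (apply pow_R1_Rle; lra). lra. }
  destruct (archimed (z * 2 ^ m)) as [U1 U2].
  unfold grid_floor_num in Hd.
  destruct Hd as [<-|[<-|[]]]; apply dy_bounded_of_Rabs; try lia;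
    rewrite ?Z.sub_add, ?minus_IZR; split_Rabs; lra.
Qed.

Theorem rpl_rounded_envelope gl m B Lam : gl <> [] ->
  (forall v, In v (all_lines gl) -> Rabs (dval (fst v)) <= Lam /\ line_bounded B v) ->
  rpl_of_size (rounded_envelope gl m)
    ((6 * length (all_lines gl) * length (all_lines gl) + 2) * (128 * (3 * B + m + 2) + 53)) /\
  lipschitz Lam (rounded_envelope gl m) /\
  (forall x, Rabs (rounded_envelope gl m x - min_max gl x) <= 2 * Lam / 2 ^ m).
Proof.
  intros Hne Hlines.
  assert (HL : lipschitz Lam (min_max gl)).
  { apply min_max_lipschitz; [|apply Hlines].
    destruct gl as [|g gs]; [tauto|]. pose proof (Rabs_pos (dval (fst (fst g)))).
    assert (Rabs (dval (fst (fst g))) <= Lam) by (apply Hlines; left; auto). lra. }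
  set (B3 := (3 * B + m + 2)%nat).
  split; [|split; [apply grid_rounding_lipschitz; auto|apply grid_rounding_close; auto]].
  assert (Hbps := breakpoints_bounded m gl B (fun v Hv => proj2 (Hlines v Hv))).
  pose proof (length_breakpoints m gl).
  eapply (rpl_of_size_mono _ ((3 * length (breakpoints m gl) + 2) * (2 * (64 * B3 + 25) + 3))).
  - apply Nat.mul_le_mono; lia.
  - apply rpl_of_size_affine_on_cells.
    + apply sort_dedup_increasing.
    + apply Forall_forall. intros d Hd. eapply dy_bounded_mono; [|apply Hbps; eauto]. lia.
    + apply rounded_envelope_affine_on_cells; auto; [unfold B3; lia|].
      intros v Hv. destruct (Hlines v Hv) as [_ [H1 H2]].
      split; apply (dy_bounded_mono B); auto; unfold B3; lia.
Qed.

(** * Fixed Lipschitz constant and grid *)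

Lemma pl_bitsize_bounds r :
  Forall (dy_bounded (pl_bitsize r)) (thr r) /\ Forall (line_bounded (pl_bitsize r)) (pcs r) /\
  (length (thr r) <= pl_bitsize r)%nat.
Proof.
  destruct r as [ts ps]. unfold pl_bitsize; cbn [thr pcs].
  set (St := fold_right (fun t s => (bs_dy t + s)%nat) 0%nat ts).
  set (Sp := fold_right (fun p s => (bs_dy (fst p) + bs_dy (snd p) + s)%nat) 0%nat ps).
  assert (Ht : (forall t, In t ts -> (bs_dy t <= St)%nat) /\ (length ts <= St)%nat).
  { unfold St. induction ts as [|t ts IH]; cbn [fold_right In length]; [split; [tauto|lia]|].
    destruct IH as [IH1 IH2].
    assert (1 <= bs_dy t)%nat by (unfold bs_dy; lia). split; [|lia].
    intros t' [<-|Ht']; [lia|]. specialize (IH1 t' Ht'). lia. }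
  assert (Hp : forall p, In p ps -> (bs_dy (fst p) + bs_dy (snd p) <= Sp)%nat).
  { unfold Sp. induction ps as [|p ps IH]; cbn [fold_right In]; [tauto|].
    intros p' [<-|Hp']; [lia|]. specialize (IH p' Hp'). lia. }
  destruct Ht as [Ht1 Ht2]. split; [|split; [|lia]]; apply Forall_forall.
  - intros t Ht. apply dy_bounded_bs_dy. specialize (Ht1 t Ht). lia.
  - intros p Hp'. specialize (Hp p Hp'). split; apply dy_bounded_bs_dy; lia.
Qed.

Lemma lipschitz_up_to_of_approx f g lam del Lam :
  0 <= del -> lipschitz lam f -> eps_approx del f g -> lam * (1 + del) <= Lam ->
  lipschitz_up_to g (fun x => 2 * del * Rabs (f x) + 2 * del) Lam.
Proof.
  intros Hdel Hf Hg HL x y.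
  pose proof (Hg x) as Ax. pose proof (Hg y) as Ay. pose proof (Hf x y) as Fxy.
  pose proof (Rabs_pos (x - y)).
  pose proof (lipschitz_nonneg _ _ Hf).
  assert (Rabs (f y) <= Rabs (f x) + lam * Rabs (x - y)).
  { replace (f y) with (f x - (f x - f y)) by ring. eapply Rle_trans; [apply Rabs_triang|].
    rewrite Rabs_Ropp. lra. }
  assert (f x - f y <= lam * Rabs (x - y)) by (pose proof (Rle_abs (f x - f y)); lra).
  assert (lam * (1 + del) * Rabs (x - y) <= Lam * Rabs (x - y)) by (apply Rmult_le_compat_r; auto).
  assert (del * Rabs (f y) <= del * (Rabs (f x) + lam * Rabs (x - y)))
    by (apply Rmult_le_compat_l; auto).
  split_Rabs; nra.
Qed.

Definition size_bound (s B m : nat) : nat :=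
  ((54 * (s + 1) * (s + 1) + 2) * (128 * (3 * (16 * B + 5) + m + 2) + 53))%nat.

Theorem lipschitz_rpl_approx (f g : R -> R) (lam del : R) (s : nat) (Lm : dy) (B m : nat) :
  0 < lam -> 0 <= del -> lipschitz lam f -> eps_approx del f g -> rpl_of_size g s ->
  lam * (1 + del) <= dval Lm -> dy_bounded B Lm -> (s <= B)%nat -> (m <= B)%nat ->
  exists L, rpl_of_size L (size_bound s B m) /\ lipschitz (dval Lm) L /\
    forall x, Rabs (f x - L x) <= 3 * del * Rabs (f x) + 3 * del + 2 * dval Lm / 2 ^ m.
Proof.
  intros Hlam Hdel Hf Hg [r [Hwf [Hr Hsz]]] HLm HB HsB HmB.
  assert (HL0 : 0 <= dval Lm) by nra.
  destruct (pl_bitsize_bounds r) as [Hts [Hps Hlen]].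
  set (E := fun x => 2 * del * Rabs (f x) + 2 * del).
  assert (Hmono : forall d, dy_bounded (pl_bitsize r) d -> dy_bounded B d)
    by (intros d; apply dy_bounded_mono; lia).
  destruct (lipschitz_envelope g E Lm r B) as [gl [Hne [Hn [Hlines Hsand]]]]; auto.
  { apply (lipschitz_up_to_of_approx f g lam); auto. }
  { intros x. unfold E. pose proof (Rabs_pos (f x)). nra. }
  { eapply Forall_impl; [exact Hmono|exact Hts]. }
  { eapply Forall_impl; [|exact Hps]. intros u [Hu1 Hu2]. split; auto. }
  destruct (rpl_rounded_envelope gl m (16 * B + 5) (dval Lm) Hne Hlines) as [Hrpl [Hlip Hclose]].
  exists (rounded_envelope gl m). split; [|split; auto].
  - eapply rpl_of_size_mono; [|exact Hrpl]. unfold size_bound.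
    destruct Hwf as [W1 _].
    assert (length (all_lines gl) <= 3 * (s + 1))%nat by lia.
    apply Nat.mul_le_mono; [|lia]. nia.
  - intros x. pose proof (Hg x). destruct (Hsand x) as [H1 H2]. specialize (Hclose x).
    unfold E in H1. rewrite Rabs_minus_sym in Hclose.
    replace (f x - rounded_envelope gl m x)
      with ((f x - g x) + (g x - min_max gl x) + (min_max gl x - rounded_envelope gl m x)) by ring.
    eapply Rle_trans; [apply Rabs_triang|].
    eapply Rle_trans; [apply Rplus_le_compat; [apply Rabs_triang|apply Rle_refl]|].
    rewrite (Rabs_right (g x - min_max gl x)) by lra. lra.
Qed.

(** * Choice of the parameters *)

Lemma pow2_ge_INR n : INR n + 1 <= 2 ^ n.
Proof.
  induction n; [simpl; lra|]. rewrite S_INR. simpl. pose proof (pos_INR n). lra.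
Qed.

Lemma exists_nat_ceil r : 0 < r -> exists N, r <= INR N <= r + 1.
Proof.
  intros Hr. destruct (archimed r) as [A B].
  assert (Hz : (0 < up r)%Z) by (apply lt_IZR; simpl; lra).
  exists (Z.to_nat (up r)). rewrite INR_IZR_INZ, Z2Nat.id by lia. lra.
Qed.

Lemma exists_pow2_ge r : exists K, r <= 2 ^ K.
Proof.
  destruct (exists_nat_ceil (Rabs r + 1)) as [K [HK _]]; [pose proof (Rabs_pos r); lra|].
  exists K. pose proof (Rle_abs r). pose proof (pow2_ge_INR K). lra.
Qed.

Lemma dyadic_round_up m B y : (m <= B)%nat -> 0 <= y -> y * 2 ^ m + 1 <= 2 ^ B ->
  exists d, dy_bounded B d /\ y <= dval d <= y + / 2 ^ m.
Proof.
  intros HmB Hy0 Hy. pose proof (pow2_pos m). destruct (archimed (y * 2 ^ m)) as [A1 A2].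
  assert (0 <= y * 2 ^ m) by (apply Rmult_le_pos; lra).
  exists (Dy (up (y * 2 ^ m)) m). split.
  - apply dy_bounded_of_Rabs; auto. rewrite Rabs_right; lra.
  - unfold dval; cbn [dnum dexp].
    assert (E : forall r, r / 2 ^ m * 2 ^ m = r) by (intros; field; lra).
    split; apply Rmult_le_reg_r with (2 ^ m); auto; rewrite E; [lra|].
    rewrite Rmult_plus_distr_r, Rinv_l by lra. lra.
Qed.

(* [8 lam] in [2^K] makes the rounding error [2 Lm 2^-m] at most [e/2], and [2/lam] makes
   rounding [Lm] up to the grid cost at most [e lam / 2]. *)
Lemma dyadic_lipschitz_constant lam e K N :
  0 < lam -> 0 < e <= 1 -> 8 * lam + 2 / lam + 1 <= 2 ^ K -> / e <= INR N ->
  exists Lm, dy_bounded (K + (N + K)) Lm /\ lam * (1 + e / 6) <= dval Lm <= (1 + e) * lam /\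
    2 * dval Lm / 2 ^ (N + K) <= e / 2.
Proof.
  intros Hlam He HK HN. set (m := (N + K)%nat). set (h := / 2 ^ m).
  pose proof (pow2_pos m). pose proof (pow2_pos K). pose proof (pow2_ge_INR N).
  assert (Hlam' : 0 < 2 / lam) by (apply Rdiv_lt_0_compat; lra).
  assert (Hh0 : 0 < h) by (apply Rinv_0_lt_compat; auto).
  assert (Hh : h * (8 * lam + 2 / lam + 1) <= e).
  { set (X := 8 * lam + 2 / lam + 1).
    assert (/ e * X <= 2 ^ m).
    { unfold m. rewrite pow_add. pose proof (Rinv_0_lt_compat e (proj1 He)).
      apply Rmult_le_compat; unfold X; lra. }
    replace e with (h * (e * 2 ^ m)) by (unfold h; field; lra).
    apply Rmult_le_compat_l; [lra|].
    replace X with (e * (/ e * X)) by (field; lra). apply Rmult_le_compat_l; lra. }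
  assert (Hh1 : h * lam <= e / 8) by nra.
  assert (Hh2 : h <= e * lam / 2).
  { assert (h * (2 / lam) <= e) by nra.
    replace h with (h * (2 / lam) * (lam / 2)) by (field; lra). nra. }
  set (y := lam * (1 + e / 6)).
  destruct (dyadic_round_up m (K + m) y) as [Lm [HB [HL1 HL2]]].
  - lia.
  - unfold y. nra.
  - rewrite pow_add. assert (y <= 2 * lam) by (unfold y; nra).
    assert (1 <= 2 ^ m) by (apply pow_R1_Rle; lra).
    assert (y * 2 ^ m <= 2 * lam * 2 ^ m) by (apply Rmult_le_compat_r; lra).
    assert ((2 * lam + 1) * 2 ^ m <= 2 ^ K * 2 ^ m) by (apply Rmult_le_compat_r; lra).
    lra.
  - unfold y in *. fold h in HL2.
    assert (HL3 : dval Lm <= 2 * lam) by nra.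
    exists Lm. split; [auto|split; [split; nra|]].
    unfold Rdiv. fold h.
    assert (dval Lm * h <= 2 * lam * h) by (apply Rmult_le_compat_r; lra). lra.
Qed.

Lemma size_bound_poly s N K :
  (size_bound s (s + K + (N + K)) (N + K) <= 64 * 128 * 128 * (s + N + K + 1) ^ 3)%nat.
Proof.
  unfold size_bound. set (T := (s + N + K + 1)%nat).
  assert (P1 : (54 * (s + 1) * (s + 1) + 2 <= 64 * T * T)%nat) by (unfold T; nia).
  assert (P2 : (128 * (3 * (16 * (s + K + (N + K)) + 5) + (N + K) + 2) + 53 <= 128 * 128 * T)%nat)
    by (unfold T; lia).
  replace (64 * 128 * 128 * T ^ 3)%nat with ((64 * T * T) * (128 * 128 * T))%nat
    by (simpl (T ^ 3)%nat; ring).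
  apply Nat.mul_le_mono; auto.
Qed.

Lemma size_poly_le (C s N K c0 k0 : nat) (X : R) :
  1 <= X -> INR s <= INR c0 * (6 * X) ^ k0 -> INR N <= X ->
  INR (C * (s + N + K + 1) ^ 3) <= INR (C * (c0 * 6 ^ k0 + K + 2) ^ 3) * X ^ (3 * k0 + 3).
Proof.
  intros HX Hs HN.
  set (A := (c0 * 6 ^ k0 + K + 2)%nat).
  assert (Hpow : forall j, (j <= k0 + 1)%nat -> X ^ j <= X ^ (k0 + 1))
    by (intros; apply Rle_pow; auto).
  assert (HT : INR (s + N + K + 1) <= INR A * X ^ (k0 + 1)).
  { unfold A. rewrite !plus_INR, mult_INR, pow_INR, Rpow_mult_distr in *.
    pose proof (Hpow k0 ltac:(lia)). pose proof (Hpow 1%nat ltac:(lia)).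
    pose proof (Hpow 0%nat ltac:(lia)).
    replace (INR 6) with 6 by (simpl; lra). replace (INR 2) with 2 by (simpl; lra).
    rewrite INR_1, pow_1, pow_O in *.
    assert (0 <= INR c0 * 6 ^ k0) by (apply Rmult_le_pos; [apply pos_INR|apply pow_le; lra]).
    pose proof (pos_INR K).
    assert (INR c0 * 6 ^ k0 * X ^ k0 <= INR c0 * 6 ^ k0 * X ^ (k0 + 1))
      by (apply Rmult_le_compat_l; auto).
    assert (INR K <= INR K * X ^ (k0 + 1))
      by (rewrite <- (Rmult_1_r (INR K)) at 1; apply Rmult_le_compat_l; auto).
    rewrite <- Rmult_assoc in Hs. lra. }
  rewrite !mult_INR, !pow_INR.
  replace (3 * k0 + 3)%nat with ((k0 + 1) * 3)%nat by lia.
  rewrite pow_mult, Rmult_assoc, <- Rpow_mult_distr.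
  apply Rmult_le_compat_l; [apply pos_INR|]. apply pow_incr. split; [apply pos_INR|auto].
Qed.

Definition lipschitz_rpl_approx_at (f : R -> R) (lam : R) (c k : nat) (eps : R) : Prop :=
  exists (L : R -> R) (s : nat),
    rpl_of_size L s /\ INR s <= INR c * (1 + / eps) ^ k /\
    eps_approx eps f L /\ lipschitz ((1 + eps) * lam) L.

Lemma lipschitz_rpl_approx_le_1 f lam c0 k0 K : 0 < lam -> lipschitz lam f ->
  (forall del, 0 < del -> exists (g : R -> R) (s : nat),
     continuity g /\ rpl_of_size g s /\ INR s <= INR c0 * (1 + / del) ^ k0 /\ eps_approx del f g) ->
  8 * lam + 2 / lam + 1 <= 2 ^ K ->
  forall e, 0 < e <= 1 ->
    lipschitz_rpl_approx_at f lam (64 * 128 * 128 * (c0 * 6 ^ k0 + K + 2) ^ 3) (3 * k0 + 3) e.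
Proof.
  intros Hlam Hf Happ HK e He.
  destruct (Happ (e / 6)) as [g [s [_ [Hg [Hs Hga]]]]]; [lra|].
  destruct (exists_nat_ceil (/ e)) as [N [HN1 HN2]]; [apply Rinv_0_lt_compat; lra|].
  destruct (dyadic_lipschitz_constant lam e K N) as [Lm [HB [[HL1 HL2] HL3]]]; auto.
  destruct (lipschitz_rpl_approx f g lam (e / 6) s Lm (s + K + (N + K)) (N + K))
    as [L [HLs [HLl HLe]]]; auto; try lra; try lia.
  { apply (dy_bounded_mono (K + (N + K))); auto; lia. }
  exists L, (size_bound s (s + K + (N + K)) (N + K)). split; [auto|split; [|split]].
  - eapply Rle_trans; [apply le_INR, size_bound_poly|]. apply size_poly_le; [|auto|lra].
    + pose proof (Rinv_0_lt_compat e (proj1 He)). lra.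
    + eapply Rle_trans; [exact Hs|]. apply Rmult_le_compat_l; [apply pos_INR|].
      apply pow_incr. pose proof (Rinv_0_lt_compat e (proj1 He)).
      replace (/ (e / 6)) with (6 * / e) by (field; lra). lra.
  - intros x. specialize (HLe x). pose proof (Rabs_pos (f x)). nra.
  - intros x y. eapply Rle_trans; [apply HLl|]. apply Rmult_le_compat_r; [apply Rabs_pos|lra].
Qed.

Lemma eps_approx_mono e e' f L : e <= e' -> eps_approx e f L -> eps_approx e' f L.
Proof.
  intros H HL x. specialize (HL x). pose proof (Rabs_pos (f x)).
  assert (e * Rabs (f x) <= e' * Rabs (f x)) by (apply Rmult_le_compat_r; auto). lra.
Qed.

Lemma lipschitz_mono a b L : a <= b -> lipschitz a L -> lipschitz b L.
Proof.
  intros H HL x y. eapply Rle_trans; [apply HL|]. apply Rmult_le_compat_r; [apply Rabs_pos|auto].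
Qed.

(* Beyond [eps = 1], the construction for [eps = 1] does, at the price of a factor [2^k]. *)
Lemma lipschitz_rpl_approx_at_all f lam c k : 0 <= lam ->
  (forall e, 0 < e <= 1 -> lipschitz_rpl_approx_at f lam c k e) ->
  forall eps, 0 < eps -> lipschitz_rpl_approx_at f lam (c * 2 ^ k) k eps.
Proof.
  intros Hlam H eps Heps.
  assert (HX : 1 <= (1 + / eps) ^ k)
    by (apply pow_R1_Rle; pose proof (Rinv_0_lt_compat _ Heps); lra).
  assert (H2 : 1 <= 2 ^ k) by (apply pow_R1_Rle; lra).
  assert (Hc : 0 <= INR c) by apply pos_INR.
  assert (Hc2 : INR (c * 2 ^ k) = INR c * 2 ^ k)
    by (rewrite mult_INR, pow_INR; reflexivity).
  destruct (Rle_dec eps 1) as [Hle|Hgt].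
  - destruct (H eps (conj Heps Hle)) as [L [s [HL1 [HL2 HL3]]]]. exists L, s.
    split; [auto|split; [|auto]]. rewrite Hc2. eapply Rle_trans; [exact HL2|].
    apply Rmult_le_compat_r; [lra|]. nra.
  - destruct (H 1 ltac:(lra)) as [L [s [HL1 [HL2 [HL3 HL4]]]]]. exists L, s.
    split; [auto|split; [|split]].
    + rewrite Hc2. rewrite Rinv_1 in HL2. eapply Rle_trans; [exact HL2|].
      assert (0 <= INR c * 2 ^ k) by nra. replace (1 + 1) with 2 by ring. nra.
    + apply (eps_approx_mono 1); auto; lra.
    + apply (lipschitz_mono ((1 + 1) * lam)); auto; nra.
Qed.

Theorem lemma6p9 (f : R -> R) (lam : R) :
  0 < lam -> lipschitz lam f -> rpl_approximable f ->
  exists c k : nat, forall eps, 0 < eps ->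
    exists (L : R -> R) (s : nat),
      rpl_of_size L s /\ INR s <= INR c * (1 + / eps) ^ k /\
      eps_approx eps f L /\ lipschitz ((1 + eps) * lam) L.
Proof.
  intros Hlam Hf [c0 [k0 Happ]].
  destruct (exists_pow2_ge (8 * lam + 2 / lam + 1)) as [K HK].
  exists (64 * 128 * 128 * (c0 * 6 ^ k0 + K + 2) ^ 3 * 2 ^ (3 * k0 + 3))%nat, (3 * k0 + 3)%nat.
  apply lipschitz_rpl_approx_at_all; [lra|].
  apply (lipschitz_rpl_approx_le_1 f lam c0 k0 K); auto.
Qed.
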